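(* $\operatorname{Proj}^+_\mathbb{R}\le_{\mathrm{W}}\operatorname{LLPO}*\lim$.
   Context: Represented spaces: a representation of a set $X$ is a partial surjection $\delta_X:\subseteq\mathbb{N}^\mathbb{N}\to X$. For a partial multi-valued function $f:\subseteq X\rightrightarrows Y$, a realizer is a partial $F:\subseteq\mathbb{N}^\mathbb{N}\to\mathbb{N}^\mathbb{N}$ with $\delta_Y(F(p))\in f(\delta_X(p))$ for all $p$ with $\delta_X(p)\in\mathrm{dom}(f)$. Weihrauch reducibility: $f\le_{\mathrm{W}} g$ iff there are computable partial $H:\subseteq\mathbb{N}^\mathbb{N}\times\mathbb{N}^\mathbb{N}\to\mathbb{N}^\mathbb{N}$ and $K:\subseteq\mathbb{N}^\mathbb{N}\to\mathbb{N}^\mathbb{N}$ such that $p\mapsto H(p,G(K(p)))$ is a realizer of $f$ for every realizer $G$ of $g$. The compositional product $g*f$ is the Weihrauch degree which is the maximum (it exists) of the degrees of $g_0\circ f_0$ over all $g_0\le_{\mathrm{W}}g$ and $f_0\le_{\mathrm{W}}f$. $\mathbb{R}$ has the Cauchy representation. $\mathcal{A}_+(\mathbb{R})$: closed subsets of $\mathbb{R}$ with positive information, a name of $A$ enumerating exactly the rational open intervals meeting $A$ (for nonempty $A$ equivalently, a sequence of reals whose closure is $A$). $\operatorname{Proj}^+_\mathbb{R}:\subseteq\mathbb{R}\times\mathcal{A}_+(\mathbb{R})\rightrightarrows\mathbb{R}$ maps $(x,A)$ with $A$ nonempty closed to the set of $y\in A$ with $|x-y|=d(x,A)$. $\operatorname{LLPO}:\subseteq\mathbb{N}^\mathbb{N}\times\mathbb{N}^\mathbb{N}\rightrightarrows\{0,1\}$: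 its domain consists of pairs $(p_0,p_1)$ such that there is at most one pair $(j,m)$ with $p_j(m)\ne0$, and $i\in\operatorname{LLPO}(p_0,p_1)$ iff $p_i=0^\mathbb{N}$. $\lim:\subseteq(\mathbb{N}^\mathbb{N})^\mathbb{N}\to\mathbb{N}^\mathbb{N}$ maps a convergent sequence in Baire space to its limit. *)

From Stdlib Require Import Reals Rtopology QArith Qreals Arith List.
Open Scope R_scope.

Definition Baire := nat -> nat.

Definition npair (a b : nat) : nat := ((a + b) * (a + b + 1) / 2 + b)%nat.
Definition nunpair (z : nat) : nat * nat :=
  let w := ((Nat.sqrt (8 * z + 1) - 1) / 2)%nat in
  let t := (w * (w + 1) / 2)%nat in
  let y := (z - t)%nat in
  ((w - y)%nat, y).

Fixpoint lcode (l : list nat) : nat :=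
  match l with nil => 0%nat | x :: l' => S (npair x (lcode l')) end.

Definition prefix (p : Baire) (k : nat) : list nat := map p (seq 0 k).

Definition bpair (p q : Baire) : Baire :=
  fun n => if Nat.even n then p (Nat.div2 n) else q (Nat.div2 n).
Definition beven (p : Baire) : Baire := fun n => p (2 * n)%nat.
Definition bodd (p : Baire) : Baire := fun n => p (2 * n + 1)%nat.

Inductive rec : Type :=
| RZero : rec
| RSucc : rec
| RProj : nat -> rec
| RComp : rec -> list rec -> rec
| RPrimRec : rec -> rec -> rec
| RMu : rec -> rec.

Inductive evalR : rec -> list nat -> nat -> Prop :=
| eZero v : evalR RZero v 0
| eSucc x v : evalR RSucc (x :: v) (S x)
| eProj i v : (i < length v)%nat -> evalR (RProj i) v (nth i v 0%nat)
| eComp f gs v ys y :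
    Forall2 (fun g y => evalR g v y) gs ys -> evalR f ys y -> evalR (RComp f gs) v y
| ePR0 f g v y : evalR f v y -> evalR (RPrimRec f g) (0%nat :: v) y
| ePRS f g n v r y :
    evalR (RPrimRec f g) (n :: v) r -> evalR g (n :: r :: v) y ->
    evalR (RPrimRec f g) (S n :: v) y
| eMu f v n :
    evalR f (n :: v) 0 ->
    (forall m, (m < n)%nat -> exists k, evalR f (m :: v) (S k)) ->
    evalR (RMu f) v n.

(* Type-2 machine given by the code e: the partial computable function
   Phi_e : B -> B with Phi_e(p) = q iff for every n, the first k with
   e(<n, p|k>) <> 0 exists and e(<n, p|k>) = q(n) + 1. *)
Definition computes (e : rec) (p q : Baire) : Prop :=
  forall n, exists k,
    evalR e (npair n (lcode (prefix p k)) :: nil) (S (q n)) /\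
    forall k', (k' < k)%nat -> evalR e (npair n (lcode (prefix p k')) :: nil) 0%nat.

(* a representation, given as the graph of the partial map delta *)
Record rspace : Type := RSpace { carrier : Type; delta : Baire -> carrier -> Prop }.

Record mvf (X Y : rspace) : Type :=
  MVF { mdom : carrier X -> Prop; mval : carrier X -> carrier Y -> Prop }.
Arguments mdom {X Y} _ _.
Arguments mval {X Y} _ _ _.

(* realizers (partial realizers extend to total ones, classically) *)
Definition realizer {X Y : rspace} (f : mvf X Y) (F : Baire -> Baire) : Prop :=
  forall p x, delta X p x -> mdom f x ->
    exists y, delta Y (F p) y /\ mval f x y.

Definition Wred {X Y Z W : rspace} (f : mvf X Y) (g : mvf Z W) : Prop :=
  exists eK eH : rec,
    forall G : Baire -> Baire, realizer g G ->
      forall p x, delta X p x -> mdom f x ->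
        exists q s, computes eK p q /\ computes eH (bpair p (G q)) s /\
          exists y, delta Y s y /\ mval f x y.

Definition mcomp {X Y Z : rspace} (g : mvf Y Z) (f : mvf X Y) : mvf X Z :=
  MVF X Z (fun x => mdom f x /\ forall y, mval f x y -> mdom g y)
          (fun x z => exists y, mval f x y /\ mval g y z).

(* f <=_W g * h, where g * h is the maximum of the degrees of g0 o h0 over
   g0 <=_W g, h0 <=_W h *)
Definition Wred_cprod {X Y A B C D : rspace}
  (f : mvf X Y) (g : mvf A B) (h : mvf C D) : Prop :=
  exists (U V W : rspace) (g0 : mvf V W) (h0 : mvf U V),
    Wred g0 g /\ Wred h0 h /\ Wred f (mcomp g0 h0).

Definition BaireS : rspace := RSpace Baire (fun p q => p = q).
Definition Baire2S : rspace :=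
  RSpace (Baire * Baire) (fun p pq => beven p = fst pq /\ bodd p = snd pq).
Definition BaireSeqS : rspace :=
  RSpace (nat -> Baire) (fun p x => x = fun i n => p (npair i n)).
Definition BitS : rspace :=
  RSpace bool (fun p b => p 0%nat = (if b then 1%nat else 0%nat)).

(* rationals: a computable surjection nat -> Q *)
Definition zdec (a : nat) : Z :=
  if Nat.even a then Z.of_nat (Nat.div2 a) else (- Z.of_nat (Nat.div2 (S a)))%Z.
Definition qdec (n : nat) : Q :=
  let (a, b) := nunpair n in Qmake (zdec a) (Pos.of_succ_nat b).

Definition cauchy (p : Baire) (x : R) : Prop :=
  forall n, Rabs (Q2R (qdec (p n)) - x) <= (/ 2) ^ n.
Definition RS : rspace := RSpace R cauchy.

(* rational open intervals: code k is the interval (qdec a, qdec b) *)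
Definition meets (A : R -> Prop) (k : nat) : Prop :=
  let (a, b) := nunpair k in exists x, A x /\ Q2R (qdec a) < x < Q2R (qdec b).

(* A_+(R): p names the closed set A iff p enumerates (p(n) = k+1 lists k,
   p(n) = 0 lists nothing) exactly the codes of rational open intervals
   meeting A *)
Definition Aplus (p : Baire) (A : R -> Prop) : Prop :=
  closed_set A /\ forall k, (exists n, p n = S k) <-> meets A k.
Definition AplusS : rspace := RSpace (R -> Prop) Aplus.

Definition RxAplusS : rspace :=
  RSpace (R * (R -> Prop))
         (fun p xa => cauchy (beven p) (fst xa) /\ Aplus (bodd p) (snd xa)).

Definition is_dist (x : R) (A : R -> Prop) (d : R) : Prop :=
  (forall a, A a -> d <= Rabs (x - a)) /\
  (forall e, (forall a, A a -> e <= Rabs (x - a)) -> e <= d).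

Definition ProjR : mvf RxAplusS RS :=
  MVF RxAplusS RS
    (fun xa => closed_set (snd xa) /\ exists a, snd xa a)
    (fun xa y => snd xa y /\ is_dist (fst xa) (snd xa) (Rabs (fst xa - y))).

Definition LLPO : mvf Baire2S BitS :=
  MVF Baire2S BitS
    (fun pq => forall (j j' : bool) m m',
        (if j then snd pq else fst pq) m <> 0%nat ->
        (if j' then snd pq else fst pq) m' <> 0%nat -> j = j' /\ m = m')
    (fun pq i => (if i then snd pq else fst pq) = fun _ => 0%nat).

Definition baire_conv (x : nat -> Baire) (q : Baire) : Prop :=
  forall k, exists N, forall i, (N <= i)%nat -> forall n, (n < k)%nat -> x i n = q n.

Definition lim : mvf BaireSeqS BaireS :=
  MVF BaireSeqS BaireS (fun x => exists q, baire_conv x q) baire_conv.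

From Stdlib Require Import Reals Rtopology QArith Qreals Arith List.
From Stdlib Require Import Lia Lra ConstructiveEpsilon ClassicalEpsilon.
Import ListNotations.

(* A point of A nearest to x is x - d or x + d, where d = d(x, A); the problem is to decide
   which one lies in A. One application of lim turns a name of (x, A) into the characteristic
   function of countably many Σ⁰₁ facts ("atoms"): rho < x - d and x + d < rho for rationals
   rho, and whether A meets a rational interval. Given the atoms, x - d ∉ A and x + d ∉ A are
   both semi-decidable, and at least one of them fails. Keeping only the first certificate
   found for either yields an LLPO instance; its answer names a point of A at distance d,
   which is then computable from the atoms again. *)

(** * μ-recursive functions *)

Open Scope nat_scope.

Definition MuRec (n : nat) (f : list nat -> nat) : Prop :=
  exists e, forall v, length v = n -> evalR e v (f v).

Lemma murec_ext n f g :
  MuRec n f -> (forall v, length v = n -> f v = g v) -> MuRec n g.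
Proof. intros [e He] Hfg. exists e. intros v Hv. rewrite <- Hfg by exact Hv. auto. Qed.

Fixpoint rconst (c : nat) : rec :=
  match c with 0 => RZero | S c' => RComp RSucc [rconst c'] end.

Lemma murec_const n c : MuRec n (fun _ => c).
Proof.
  exists (rconst c). intros v _. induction c as [|c IH]; simpl; [constructor|].
  apply eComp with [c]; repeat constructor. exact IH.
Qed.

Lemma murec_proj n i : i < n -> MuRec n (fun v => nth i v 0).
Proof. intros Hi. exists (RProj i). intros v Hv. constructor. lia. Qed.

Lemma eval_projs_from l k v :
  (forall i, i < length l -> nth (k + i) v 0 = nth i l 0) -> k + length l <= length v ->
  Forall2 (fun g y => evalR g v y) (map RProj (seq k (length l))) l.
Proof.
  revert k. induction l as [|a l IH]; intros k Hl Hlen; simpl in *; constructor.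
  - specialize (Hl 0). rewrite Nat.add_0_r in Hl. rewrite <- Hl by lia. constructor. lia.
  - apply IH; [|lia]. intros i Hi. rewrite <- (Hl (S i)) by lia. f_equal. lia.
Qed.

Definition rprojs (n : nat) : list rec := map RProj (seq 0 n).

Lemma eval_rprojs v : Forall2 (fun g y => evalR g v y) (rprojs (length v)) v.
Proof. apply eval_projs_from; auto. Qed.

Lemma murec_succ n g : MuRec n g -> MuRec n (fun v => S (g v)).
Proof.
  intros [e He]. exists (RComp RSucc [e]). intros v Hv.
  apply eComp with [g v]; repeat constructor. auto.
Qed.

Lemma murec_let n h b :
  MuRec (S n) h -> MuRec n b -> MuRec n (fun v => h (b v :: v)).
Proof.
  intros [eh Hh] [eb Hb]. exists (RComp eh (eb :: rprojs n)). intros v Hv.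
  apply eComp with (b v :: v).
  - constructor; [auto|]. subst n. apply eval_rprojs.
  - apply Hh. simpl. lia.
Qed.

Lemma murec_primrec n b s m :
  MuRec n b -> MuRec (S (S n)) s -> MuRec n m ->
  MuRec n (fun v => nat_rect (fun _ => nat) (b v) (fun k r => s (k :: r :: v)) (m v)).
Proof.
  intros [eb Hb] [es Hs] [em Hm]. exists (RComp (RPrimRec eb es) (em :: rprojs n)).
  intros v Hv. apply eComp with (m v :: v).
  { constructor; [auto|]. subst n. apply eval_rprojs. }
  induction (m v) as [|k IH]; simpl.
  - constructor. auto.
  - eapply ePRS; [exact IH|]. apply Hs. simpl. lia.
Qed.

Lemma murec_mu n f h : MuRec (S n) f ->
  (forall v, length v = n -> f (h v :: v) = 0 /\ forall m, m < h v -> f (m :: v) <> 0) ->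
  MuRec n h.
Proof.
  intros [ef Hf] Hh. exists (RMu ef). intros v Hv. destruct (Hh v Hv) as [Hzero Hpos].
  constructor.
  - rewrite <- Hzero. apply Hf. simpl. lia.
  - intros m Hm. specialize (Hpos m Hm). destruct (f (m :: v)) as [|k] eqn:E; [congruence|].
    exists k. rewrite <- E. apply Hf. simpl. lia.
Qed.

Lemma murec_comp n m h gs : MuRec m h -> length gs = m -> Forall (MuRec n) gs ->
  MuRec n (fun v => h (map (fun g => g v) gs)).
Proof.
  intros [eh Hh] Hlen Hgs.
  assert (Hes : exists es,
    Forall2 (fun e g => forall v, length v = n -> evalR e v (g v)) es gs).
  { clear Hlen. induction Hgs as [|g gs [e He] _ [es Hes]].
    - exists nil. constructor.
    - exists (e :: es). constructor; auto. }
  destruct Hes as [es Hes]. exists (RComp eh es). intros v Hv.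
  apply eComp with (map (fun g => g v) gs).
  - clear - Hes Hv. induction Hes; simpl; constructor; auto.
  - apply Hh. rewrite length_map. auto.
Qed.

Lemma murec_comp1 n h g :
  MuRec 1 (fun v => h (nth 0 v 0)) -> MuRec n g -> MuRec n (fun v => h (g v)).
Proof. intros Hh Hg. exact (murec_comp n 1 _ [g] Hh eq_refl (Forall_cons _ Hg (Forall_nil _))). Qed.

Lemma murec_comp2 n h g1 g2 :
  MuRec 2 (fun v => h (nth 0 v 0) (nth 1 v 0)) -> MuRec n g1 -> MuRec n g2 ->
  MuRec n (fun v => h (g1 v) (g2 v)).
Proof.
  intros Hh H1 H2.
  exact (murec_comp n 2 _ [g1; g2] Hh eq_refl (Forall_cons _ H1 (Forall_cons _ H2 (Forall_nil _)))).
Qed.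

Lemma murec_comp3 n h g1 g2 g3 :
  MuRec 3 (fun v => h (nth 0 v 0) (nth 1 v 0) (nth 2 v 0)) ->
  MuRec n g1 -> MuRec n g2 -> MuRec n g3 -> MuRec n (fun v => h (g1 v) (g2 v) (g3 v)).
Proof.
  intros Hh H1 H2 H3.
  exact (murec_comp n 3 _ [g1; g2; g3] Hh eq_refl
    (Forall_cons _ H1 (Forall_cons _ H2 (Forall_cons _ H3 (Forall_nil _))))).
Qed.

Lemma murec_tl n g : MuRec n g -> MuRec (S n) (fun v => g (tl v)).
Proof.
  intros [eg Hg]. exists (RComp eg (map RProj (seq 1 n))). intros [|a v] Hv; [discriminate|].
  simpl in Hv |- *. apply eComp with v; [|apply Hg; lia].
  replace n with (length v) by lia. apply eval_projs_from; simpl; auto.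
Qed.

Lemma murec_add : MuRec 2 (fun v => nth 0 v 0 + nth 1 v 0).
Proof.
  eapply murec_ext.
  - apply (murec_primrec 2 (fun v => nth 1 v 0) (fun u => S (nth 1 u 0)) (fun v => nth 0 v 0)).
    + apply murec_proj. lia.
    + apply murec_succ, murec_proj. lia.
    + apply murec_proj. lia.
  - intros v _. simpl. induction (nth 0 v 0); simpl; auto.
Qed.

Lemma murec_mul : MuRec 2 (fun v => nth 0 v 0 * nth 1 v 0).
Proof.
  eapply murec_ext.
  - apply (murec_primrec 2 (fun _ => 0) (fun u => nth 1 u 0 + nth 3 u 0) (fun v => nth 0 v 0)).
    + apply murec_const.
    + apply (murec_comp2 4 Nat.add); [apply murec_add | apply murec_proj; lia ..].
    + apply murec_proj. lia.
  - intros v _. simpl. induction (nth 0 v 0) as [|k IH]; simpl; auto. rewrite IH. lia.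
Qed.

Lemma murec_pred : MuRec 1 (fun v => pred (nth 0 v 0)).
Proof.
  eapply murec_ext.
  - apply (murec_primrec 1 (fun _ => 0) (fun u => nth 0 u 0) (fun v => nth 0 v 0)).
    + apply murec_const.
    + apply murec_proj. lia.
    + apply murec_proj. lia.
  - intros v _. simpl. destruct (nth 0 v 0); reflexivity.
Qed.

Lemma murec_sub : MuRec 2 (fun v => nth 0 v 0 - nth 1 v 0).
Proof.
  eapply murec_ext.
  - apply (murec_primrec 2 (fun v => nth 0 v 0) (fun u => pred (nth 1 u 0)) (fun v => nth 1 v 0)).
    + apply murec_proj. lia.
    + apply (murec_comp1 4 pred); [apply murec_pred | apply murec_proj; lia].
    + apply murec_proj. lia.
  - intros v _. simpl. induction (nth 1 v 0) as [|b IH]; simpl; [lia|]. rewrite IH. lia.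
Qed.

(** * Bounded search and a language of μ-recursive expressions *)

(* The least [t < B] with [P t], or [B] if there is none. *)
Fixpoint bsearch (P : nat -> bool) (B : nat) : nat :=
  match B with
  | 0 => 0
  | S B' => let r := bsearch P B' in if r <? B' then r else if P B' then B' else B
  end.

Lemma bsearch_le P B : bsearch P B <= B.
Proof.
  induction B as [|B IH]; simpl; [lia|].
  destruct (Nat.ltb_spec (bsearch P B) B); [lia|]. destruct (P B); lia.
Qed.

Lemma bsearch_lt_false P B m : m < bsearch P B -> P m = false.
Proof.
  induction B as [|B IH]; simpl; [lia|]. pose proof (bsearch_le P B).
  destruct (Nat.ltb_spec (bsearch P B) B); [auto|].
  destruct (P B) eqn:E; intros Hm; [apply IH; lia|].
  destruct (Nat.eq_dec m B) as [->|]; [auto | apply IH; lia].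
Qed.

Lemma bsearch_lt_true P B : bsearch P B < B -> P (bsearch P B) = true.
Proof.
  induction B as [|B IH]; simpl; [lia|].
  destruct (Nat.ltb_spec (bsearch P B) B); [auto|]. destruct (P B) eqn:E; [auto | lia].
Qed.

Lemma bsearch_le_witness P B m :
  m < B -> P m = true -> bsearch P B <= m /\ P (bsearch P B) = true.
Proof.
  intros HmB Hm. destruct (Nat.lt_ge_cases m (bsearch P B)) as [Hlt|Hge].
  - rewrite (bsearch_lt_false P B m Hlt) in Hm. discriminate.
  - split; [exact Hge|]. apply bsearch_lt_true. lia.
Qed.

Lemma bsearch_ext P Q B : (forall t, t < B -> P t = Q t) -> bsearch P B = bsearch Q B.
Proof.
  induction B as [|B IH]; simpl; intros H; [reflexivity|].
  rewrite IH by (intros; apply H; lia). rewrite H by lia. reflexivity.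
Qed.

Lemma bsearch_least P B r :
  r < B -> P r = true -> (forall t, t < r -> P t = false) -> bsearch P B = r.
Proof.
  intros HrB Hr Hmin. destruct (bsearch_le_witness P B r HrB Hr) as [Hle Htrue].
  destruct (Nat.eq_dec (bsearch P B) r) as [|Hne]; [assumption|].
  rewrite Hmin in Htrue by lia. discriminate.
Qed.

Lemma bsearch_none P B : (forall t, t < B -> P t = false) -> bsearch P B = B.
Proof.
  intros Hnone. pose proof (bsearch_le P B).
  destruct (Nat.eq_dec (bsearch P B) B) as [|Hne]; [assumption|].
  assert (Hlt : bsearch P B < B) by lia.
  pose proof (bsearch_lt_true P B Hlt). rewrite Hnone in * by exact Hlt. discriminate.
Qed.

(* The least witness [s] of [P] is found once its certificate, which needs [B s] steps, fits
   into the search bound [k]; before that nothing is found, as [B] is monotone. *)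
Lemma bsearch_bounded_least (P : nat -> Prop) (B : nat -> nat) (Q : nat -> bool) k s :
  (forall r, Q r = true <-> B r < k /\ P r) -> P s -> (forall r, r < s -> ~ P r) ->
  (forall r r', r <= r' -> B r <= B r') -> (forall r, r < B r) ->
  bsearch Q k = if B s <? k then s else k.
Proof.
  intros HQ Hs Hmin Hmono Hlt. pose proof (Hlt s).
  destruct (Nat.ltb_spec (B s) k) as [Hk|Hk].
  - apply bsearch_least; [lia | apply HQ; auto|].
    intros r Hr. destruct (Q r) eqn:E; [|reflexivity]. exfalso.
    apply HQ in E as [_ HPr]. exact (Hmin r Hr HPr).
  - apply bsearch_none. intros r Hr. destruct (Q r) eqn:E; [|reflexivity]. exfalso.
    apply HQ in E as [HBr HPr]. destruct (Nat.lt_ge_cases r s) as [Hrs|Hrs].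
    + exact (Hmin r Hrs HPr).
    + pose proof (Hmono _ _ Hrs). lia.
Qed.

Definition nonzero (n : nat) : bool := negb (n =? 0).

Lemma nonzero_true n : nonzero n = true <-> n <> 0.
Proof. unfold nonzero. destruct n; simpl; split; congruence. Qed.

Lemma murec_bsearch n body B : MuRec (S n) body -> MuRec n B ->
  MuRec n (fun v => bsearch (fun t => nonzero (body (t :: v))) (B v)).
Proof.
  intros Hbody HB.
  (* [B v - t] vanishes past the bound, [1 - body] vanishes on witnesses *)
  apply murec_mu with (f := fun u => (B (tl u) - hd 0 u) * (1 - body u)).
  - apply (murec_comp2 _ Nat.mul); [apply murec_mul| |].
    + apply (murec_comp2 _ Nat.sub); [apply murec_sub | apply murec_tl; auto |].
      eapply murec_ext; [apply (murec_proj _ 0); lia | intros [|? ?] _; reflexivity].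
    + apply (murec_comp2 _ Nat.sub); [apply murec_sub | apply murec_const | auto].
  - intros v _. cbn [tl hd]. set (P := fun t => nonzero (body (t :: v))). split.
    + destruct (Nat.lt_ge_cases (bsearch P (B v)) (B v)) as [Hlt|Hge].
      * apply bsearch_lt_true, nonzero_true in Hlt. lia.
      * replace (B v - bsearch P (B v)) with 0 by lia. reflexivity.
    + intros m Hm. pose proof (bsearch_le P (B v)).
      pose proof (bsearch_lt_false P (B v) m Hm) as Hf. unfold P in Hf.
      destruct (body (m :: v)); [lia | discriminate].
Qed.

Inductive expr : Type :=
| EVar (i : nat)
| EConst (c : nat)
| ESucc (a : expr)
| ERec (b s m : expr)
| ESearch (body bound : expr)
| ELet (a body : expr)
| EOp1 (f : nat -> nat) (H : MuRec 1 (fun v => f (nth 0 v 0))) (a : expr)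
| EOp2 (f : nat -> nat -> nat) (H : MuRec 2 (fun v => f (nth 0 v 0) (nth 1 v 0))) (a b : expr)
| EOp3 (f : nat -> nat -> nat -> nat)
    (H : MuRec 3 (fun v => f (nth 0 v 0) (nth 1 v 0) (nth 2 v 0))) (a b c : expr).

(* [ERec], [ESearch] and [ELet] bind variables: [EVar 0] is the newest one. *)
Fixpoint eval_expr (e : expr) (v : list nat) : nat :=
  match e with
  | EVar i => nth i v 0
  | EConst c => c
  | ESucc a => S (eval_expr a v)
  | ERec b s m => nat_rect (fun _ => nat) (eval_expr b v)
                    (fun k r => eval_expr s (k :: r :: v)) (eval_expr m v)
  | ESearch body B => bsearch (fun t => nonzero (eval_expr body (t :: v))) (eval_expr B v)
  | ELet a body => eval_expr body (eval_expr a v :: v)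
  | EOp1 f _ a => f (eval_expr a v)
  | EOp2 f _ a b => f (eval_expr a v) (eval_expr b v)
  | EOp3 f _ a b c => f (eval_expr a v) (eval_expr b v) (eval_expr c v)
  end.

Fixpoint expr_wf (n : nat) (e : expr) : bool :=
  match e with
  | EVar i => i <? n
  | EConst _ => true
  | ESucc a => expr_wf n a
  | ERec b s m => expr_wf n b && expr_wf (S (S n)) s && expr_wf n m
  | ESearch body B => expr_wf (S n) body && expr_wf n B
  | ELet a body => expr_wf n a && expr_wf (S n) body
  | EOp1 _ _ a => expr_wf n a
  | EOp2 _ _ a b => expr_wf n a && expr_wf n b
  | EOp3 _ _ a b c => expr_wf n a && expr_wf n b && expr_wf n c
  end.

Lemma murec_eval_expr e n : expr_wf n e = true -> MuRec n (eval_expr e).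
Proof.
  revert n. induction e; intros n Hwf; simpl in Hwf |- *;
    repeat match type of Hwf with (_ && _ = true) =>
      apply andb_prop in Hwf; destruct Hwf as [Hwf ?] end.
  - apply murec_proj, Nat.ltb_lt, Hwf.
  - apply murec_const.
  - apply murec_succ; auto.
  - apply murec_primrec; auto.
  - apply murec_bsearch; auto.
  - apply murec_let; auto.
  - apply murec_comp1; auto.
  - apply murec_comp2; auto.
  - apply murec_comp3; auto.
Qed.

Lemma murec1_of_expr e F : expr_wf 1 e = true -> (forall x, eval_expr e [x] = F x) ->
  MuRec 1 (fun v => F (nth 0 v 0)).
Proof.
  intros Hwf HF. eapply murec_ext; [apply murec_eval_expr, Hwf|].
  intros [|x []] Hv; try discriminate. apply HF.
Qed.

Lemma murec1_expr e : expr_wf 1 e = true -> MuRec 1 (fun v => eval_expr e [nth 0 v 0]).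
Proof. intros Hwf. exact (murec1_of_expr e _ Hwf (fun _ => eq_refl)). Qed.

Lemma murec2_of_expr e F : expr_wf 2 e = true -> (forall x y, eval_expr e [x; y] = F x y) ->
  MuRec 2 (fun v => F (nth 0 v 0) (nth 1 v 0)).
Proof.
  intros Hwf HF. eapply murec_ext; [apply murec_eval_expr, Hwf|].
  intros [|x [|y []]] Hv; try discriminate. apply HF.
Qed.

Lemma murec3_of_expr e F : expr_wf 3 e = true ->
  (forall x y z, eval_expr e [x; y; z] = F x y z) ->
  MuRec 3 (fun v => F (nth 0 v 0) (nth 1 v 0) (nth 2 v 0)).
Proof.
  intros Hwf HF. eapply murec_ext; [apply murec_eval_expr, Hwf|].
  intros [|x [|y [|z []]]] Hv; try discriminate. apply HF.
Qed.

Notation eadd a b := (EOp2 Nat.add murec_add a b).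
Notation emul a b := (EOp2 Nat.mul murec_mul a b).
Notation esub a b := (EOp2 Nat.sub murec_sub a b).
Notation epred a := (EOp1 pred murec_pred a).

(** * Arithmetic, pairing and codes of finite sequences *)

Definition nif (c a b : nat) : nat := if c =? 0 then b else a.
Definition nle (a b : nat) : nat := if a <=? b then 1 else 0.
Definition neq (a b : nat) : nat := if a =? b then 1 else 0.

Lemma nif_0 a b : nif 0 a b = b.
Proof. reflexivity. Qed.

Lemma nif_S c a b : nif (S c) a b = a.
Proof. reflexivity. Qed.

Lemma murec_nif : MuRec 3 (fun v => nif (nth 0 v 0) (nth 1 v 0) (nth 2 v 0)).
Proof.
  apply (murec3_of_expr (eadd (emul (EVar 1) (esub (EConst 1) (esub (EConst 1) (EVar 0))))
                              (emul (EVar 2) (esub (EConst 1) (EVar 0))))); [reflexivity|].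
  intros c a b. cbn [eval_expr nth]. unfold nif. destruct c; simpl; lia.
Qed.

Lemma nle_spec a b : nle a b <> 0 <-> a <= b.
Proof. unfold nle. destruct (Nat.leb_spec a b); split; lia. Qed.

Lemma murec_nle : MuRec 2 (fun v => nle (nth 0 v 0) (nth 1 v 0)).
Proof.
  apply (murec2_of_expr (esub (EConst 1) (esub (EVar 0) (EVar 1)))); [reflexivity|].
  intros x y. cbn [eval_expr nth]. unfold nle. destruct (Nat.leb_spec x y); lia.
Qed.

Notation eif c a b := (EOp3 nif murec_nif c a b).
Notation ele a b := (EOp2 nle murec_nle a b).
Notation elt a b := (ele (ESucc a) b).

Lemma murec_neq : MuRec 2 (fun v => neq (nth 0 v 0) (nth 1 v 0)).
Proof.
  apply (murec2_of_expr (emul (ele (EVar 0) (EVar 1)) (ele (EVar 1) (EVar 0)))); [reflexivity|].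
  intros x y. cbn [eval_expr nth]. unfold neq, nle.
  destruct (Nat.eqb_spec x y), (Nat.leb_spec x y), (Nat.leb_spec y x); lia.
Qed.

Notation eeq a b := (EOp2 neq murec_neq a b).
Notation enot a := (esub (EConst 1) a).
Notation eand a b := (eif a (eif b (EConst 1) (EConst 0)) (EConst 0)).
Notation eor a b := (eif a (EConst 1) (eif b (EConst 1) (EConst 0))).

Notation nnot a := (1 - a).
Notation nand a b := (nif a (nif b 1 0) 0).
Notation nor a b := (nif a 1 (nif b 1 0)).

Lemma nnot_spec a : nnot a <> 0 <-> a = 0.
Proof. lia. Qed.

Lemma nand_spec a b : nand a b <> 0 <-> a <> 0 /\ b <> 0.
Proof. unfold nif. destruct a, b; simpl; split; intros; try lia; tauto. Qed.

Lemma nor_spec a b : nor a b <> 0 <-> a <> 0 \/ b <> 0.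
Proof. unfold nif. destruct a, b; simpl; split; intros; try lia; tauto. Qed.

Lemma neq_spec a b : neq a b <> 0 <-> a = b.
Proof. unfold neq. destruct (Nat.eqb_spec a b); split; congruence. Qed.

Definition exists_below (i : nat) (f : nat -> nat) : nat :=
  nle (S (bsearch (fun t => nonzero (f t)) i)) i.

Lemma exists_below_01 i f : exists_below i f = 0 \/ exists_below i f = 1.
Proof. unfold exists_below, nle. destruct (_ <=? _); auto. Qed.

Lemma exists_below_spec i f : exists_below i f <> 0 <-> exists t, t < i /\ f t <> 0.
Proof.
  unfold exists_below, nle. set (P := fun t => nonzero (f t)).
  destruct (Nat.leb_spec (S (bsearch P i)) i) as [Hlt|Hge]; split; intros H; try lia.
  - exists (bsearch P i). split; [lia|]. apply nonzero_true, (bsearch_lt_true P i). lia.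
  - destruct H as [t [Hti Ht]]. apply nonzero_true in Ht.
    destruct (bsearch_le_witness P i t Hti Ht). lia.
Qed.

Lemma exists_below_ext i f g :
  (forall t, t < i -> f t = g t) -> exists_below i f = exists_below i g.
Proof.
  intros H. unfold exists_below. erewrite bsearch_ext; [reflexivity|].
  intros t Ht. rewrite H by exact Ht. reflexivity.
Qed.

Definition tri (w : nat) : nat := w * (w + 1) / 2.

Lemma tri_S w : tri (S w) = tri w + S w.
Proof.
  unfold tri. replace (S w * (S w + 1)) with (w * (w + 1) + S w * 2) by lia.
  rewrite Nat.div_add by lia. reflexivity.
Qed.

Lemma tri_double w : 2 * tri w = w * (w + 1).
Proof. induction w as [|w IH]; [reflexivity|]. rewrite tri_S. nia. Qed.

Lemma tri_mono a b : a <= b -> tri a <= tri b.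
Proof. induction 1; [lia|]. rewrite tri_S. lia. Qed.

Lemma tri_bracket z : exists w, tri w <= z < tri (S w).
Proof.
  induction z as [|z [w Hw]]; [exists 0; rewrite tri_S; change (tri 0) with 0; lia|].
  rewrite tri_S in Hw. destruct (Nat.eq_dec (S z) (tri w + S w)).
  - exists (S w). rewrite !tri_S. lia.
  - exists w. rewrite tri_S. lia.
Qed.

Lemma murec_tri : MuRec 1 (fun v => tri (nth 0 v 0)).
Proof.
  apply (murec1_of_expr (ERec (EConst 0) (eadd (EVar 1) (ESucc (EVar 0))) (EVar 0)));
    [reflexivity|].
  intros x. simpl. induction x as [|k IH]; [reflexivity|]. simpl. rewrite IH, tri_S. lia.
Qed.

Notation etri a := (EOp1 tri murec_tri a).

Lemma npair_tri a b : npair a b = tri (a + b) + b.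
Proof. reflexivity. Qed.

Lemma murec_npair : MuRec 2 (fun v => npair (nth 0 v 0) (nth 1 v 0)).
Proof.
  apply (murec2_of_expr (eadd (etri (eadd (EVar 0) (EVar 1))) (EVar 1))); reflexivity.
Qed.

Notation epair a b := (EOp2 npair murec_npair a b).

Lemma nunpair_bracket z w :
  tri w <= z < tri (S w) -> nunpair z = (w - (z - tri w), z - tri w).
Proof.
  intros [Hlo Hhi]. rewrite tri_S in Hhi. unfold nunpair.
  set (s := Nat.sqrt (8 * z + 1)).
  assert (Hs : s * s <= 8 * z + 1 < S s * S s) by (apply Nat.sqrt_spec; lia).
  pose proof (tri_double w).
  assert (2 * w + 1 <= s).
  { destruct (Nat.le_gt_cases (2 * w + 1) s); auto.
    assert (S s * S s <= (2 * w + 1) * (2 * w + 1)) by (apply Nat.mul_le_mono; lia). nia. }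
  assert (s <= 2 * w + 2).
  { destruct (Nat.le_gt_cases s (2 * w + 2)); auto.
    assert ((2 * w + 3) * (2 * w + 3) <= s * s) by (apply Nat.mul_le_mono; lia). nia. }
  assert (Hw : (s - 1) / 2 = w).
  { assert (s = 1 + w * 2 \/ s = 2 + w * 2) as [-> | ->] by lia.
    - replace (1 + w * 2 - 1) with (w * 2) by lia. apply Nat.div_mul. lia.
    - replace (2 + w * 2 - 1) with (1 + w * 2) by lia. rewrite Nat.div_add by lia. reflexivity. }
  rewrite Hw. reflexivity.
Qed.

Lemma nunpair_npair a b : nunpair (npair a b) = (a, b).
Proof.
  rewrite (nunpair_bracket _ (a + b)); rewrite npair_tri; [f_equal; lia|].
  rewrite tri_S. lia.
Qed.

Lemma npair_nunpair z : npair (fst (nunpair z)) (snd (nunpair z)) = z.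
Proof.
  destruct (tri_bracket z) as [w Hw]. rewrite (nunpair_bracket z w Hw). simpl.
  rewrite tri_S in Hw. rewrite npair_tri.
  replace (w - (z - tri w) + (z - tri w)) with w by lia. lia.
Qed.

Lemma npair_ge_l a b : a <= npair a b.
Proof. rewrite npair_tri. pose proof (tri_double (a + b)). nia. Qed.

Lemma npair_ge_r a b : b <= npair a b.
Proof. rewrite npair_tri. lia. Qed.

Lemma npair_mono a b a' b' : a <= a' -> b <= b' -> npair a b <= npair a' b'.
Proof. intros. rewrite !npair_tri. pose proof (tri_mono (a + b) (a' + b')). lia. Qed.

Lemma nunpair_fst_le z : fst (nunpair z) <= z.
Proof. rewrite <- (npair_nunpair z) at 2. apply npair_ge_l. Qed.

Lemma nunpair_snd_le z : snd (nunpair z) <= z.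
Proof. rewrite <- (npair_nunpair z) at 2. apply npair_ge_r. Qed.

(* [nunpair] is given by a square root; we compute it by searching the diagonal instead. *)
Definition diagonal_expr : expr :=
  ESearch (elt (EVar 1) (etri (ESucc (EVar 0)))) (ESucc (EVar 0)).

Lemma diagonal_expr_bracket z :
  tri (eval_expr diagonal_expr [z]) <= z < tri (S (eval_expr diagonal_expr [z])).
Proof.
  destruct (tri_bracket z) as [w Hw].
  set (P := fun t => nonzero (eval_expr (elt (EVar 1) (etri (ESucc (EVar 0)))) [t; z])).
  assert (HP : forall t, P t = true <-> z < tri (S t)).
  { intros t. unfold P. cbn [eval_expr nth]. unfold nle.
    destruct (Nat.leb_spec (S z) (tri (S t))); cbn [nonzero negb Nat.eqb];
      split; intros; congruence || lia. }
  assert (Hwz : w < S z).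
  { destruct (Nat.le_gt_cases (S z) w) as [Hle|]; auto.
    pose proof (tri_mono _ _ Hle). rewrite !tri_S in *. lia. }
  change (eval_expr diagonal_expr [z]) with (bsearch P (S z)).
  destruct (bsearch_le_witness P (S z) w Hwz) as [Hle Htrue]; [apply HP; lia|].
  apply HP in Htrue. split; [|exact Htrue].
  destruct (Nat.eq_dec (bsearch P (S z)) w) as [->|]; [lia|].
  pose proof (tri_mono (S (bsearch P (S z))) w ltac:(lia)). lia.
Qed.

Lemma murec_nfst : MuRec 1 (fun v => fst (nunpair (nth 0 v 0))).
Proof.
  apply (murec1_of_expr (ELet diagonal_expr (esub (EVar 0) (esub (EVar 1) (etri (EVar 0)))))
    (fun z => fst (nunpair z))); [reflexivity|].
  intros z. cbn [eval_expr nth].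
  rewrite (nunpair_bracket z _ (diagonal_expr_bracket z)). reflexivity.
Qed.

Lemma murec_nsnd : MuRec 1 (fun v => snd (nunpair (nth 0 v 0))).
Proof.
  apply (murec1_of_expr (ELet diagonal_expr (esub (EVar 1) (etri (EVar 0))))
    (fun z => snd (nunpair z))); [reflexivity|].
  intros z. cbn [eval_expr nth].
  rewrite (nunpair_bracket z _ (diagonal_expr_bracket z)). reflexivity.
Qed.

Notation efst a := (EOp1 (fun z => fst (nunpair z)) murec_nfst a).
Notation esnd a := (EOp1 (fun z => snd (nunpair z)) murec_nsnd a).

Definition ntriple (a b c : nat) : nat := npair a (npair b c).
Definition nfst3 (t : nat) : nat := fst (nunpair t).
Definition nsnd3 (t : nat) : nat := fst (nunpair (snd (nunpair t))).
Definition nthd3 (t : nat) : nat := snd (nunpair (snd (nunpair t))).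

Lemma nfst3_ntriple a b c : nfst3 (ntriple a b c) = a.
Proof. unfold nfst3, ntriple. rewrite nunpair_npair. reflexivity. Qed.

Lemma nsnd3_ntriple a b c : nsnd3 (ntriple a b c) = b.
Proof.
  unfold nsnd3, ntriple. rewrite nunpair_npair. cbn [snd]. rewrite nunpair_npair. reflexivity.
Qed.

Lemma nthd3_ntriple a b c : nthd3 (ntriple a b c) = c.
Proof.
  unfold nthd3, ntriple. rewrite nunpair_npair. cbn [snd]. rewrite nunpair_npair. reflexivity.
Qed.

Notation etriple a b c := (epair a (epair b c)).
Notation efst3 a := (efst a).
Notation esnd3 a := (efst (esnd a)).
Notation ethd3 a := (esnd (esnd a)).

Definition code_head (c : nat) : nat := fst (nunpair (pred c)).
Definition code_tail (c : nat) : nat := snd (nunpair (pred c)).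
Definition code_drop (t c : nat) : nat := nat_rect (fun _ => nat) c (fun _ r => code_tail r) t.
Definition code_nth (t c : nat) : nat := code_head (code_drop t c).
Definition code_len (c : nat) : nat :=
  bsearch (fun t => nonzero (neq (code_drop t c) 0)) (S c).

Lemma murec_code_drop : MuRec 2 (fun v => code_drop (nth 0 v 0) (nth 1 v 0)).
Proof.
  apply (murec2_of_expr (ERec (EVar 1) (esnd (epred (EVar 1))) (EVar 0))); reflexivity.
Qed.

Notation edrop t c := (EOp2 code_drop murec_code_drop t c).

Lemma murec_code_nth : MuRec 2 (fun v => code_nth (nth 0 v 0) (nth 1 v 0)).
Proof. apply (murec2_of_expr (efst (epred (edrop (EVar 0) (EVar 1))))); reflexivity. Qed.

Lemma murec_code_len : MuRec 1 (fun v => code_len (nth 0 v 0)).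
Proof.
  apply (murec1_of_expr (ESearch (eeq (edrop (EVar 0) (EVar 1)) (EConst 0)) (ESucc (EVar 0))));
    reflexivity.
Qed.

Notation enth t c := (EOp2 code_nth murec_code_nth t c).
Notation elen c := (EOp1 code_len murec_code_len c).

Lemma code_tail_lcode l : code_tail (lcode l) = lcode (tl l).
Proof.
  destruct l as [|x l]; [reflexivity|].
  unfold code_tail. cbn [lcode pred]. rewrite nunpair_npair. reflexivity.
Qed.

Lemma code_drop_lcode t l : code_drop t (lcode l) = lcode (skipn t l).
Proof.
  induction t as [|t IH]; [reflexivity|].
  change (code_tail (code_drop t (lcode l)) = lcode (skipn (S t) l)).
  rewrite IH, code_tail_lcode. f_equal. clear IH. revert l.
  induction t as [|t IH]; intros [|x l]; simpl; auto.
Qed.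

Lemma code_nth_lcode t l : t < length l -> code_nth t (lcode l) = nth t l 0.
Proof.
  unfold code_nth. rewrite code_drop_lcode. revert l.
  induction t as [|t IH]; intros [|x l] Ht; simpl in *; try lia.
  - unfold code_head. cbn [lcode pred]. rewrite nunpair_npair. reflexivity.
  - apply IH. lia.
Qed.

Lemma length_le_lcode l : length l <= lcode l.
Proof. induction l as [|x l IH]; simpl; [lia|]. pose proof (npair_ge_r x (lcode l)). lia. Qed.

Lemma code_len_lcode l : code_len (lcode l) = length l.
Proof.
  unfold code_len. set (P := fun t => nonzero (neq (code_drop t (lcode l)) 0)).
  assert (HP : forall t, P t = true <-> length l <= t).
  { intros t. unfold P. rewrite nonzero_true, neq_spec, code_drop_lcode, skipn_all_iff.
    destruct (skipn t l); simpl; split; congruence. }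
  pose proof (length_le_lcode l).
  destruct (bsearch_le_witness P (S (lcode l)) (length l)) as [Hle Htrue]; [lia | apply HP; lia|].
  apply HP in Htrue. lia.
Qed.

Lemma length_prefix p k : length (prefix p k) = k.
Proof. unfold prefix. rewrite length_map, length_seq. reflexivity. Qed.

Lemma code_nth_prefix p k t : t < k -> code_nth t (lcode (prefix p k)) = p t.
Proof.
  intros Ht. rewrite code_nth_lcode by (rewrite length_prefix; exact Ht).
  unfold prefix. rewrite nth_indep with (d' := p 0) by (rewrite length_map, length_seq; exact Ht).
  rewrite map_nth, seq_nth by exact Ht. reflexivity.
Qed.

Lemma code_len_prefix p k : code_len (lcode (prefix p k)) = k.
Proof. rewrite code_len_lcode, length_prefix. reflexivity. Qed.

Lemma bpair_even (p q : Baire) n : bpair p q (2 * n) = p n.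
Proof. unfold bpair. rewrite Nat.even_mul, Nat.div2_double. reflexivity. Qed.

Lemma bpair_odd (p q : Baire) n : bpair p q (2 * n + 1) = q n.
Proof.
  unfold bpair. rewrite Nat.add_1_r, Nat.even_succ, Nat.odd_mul, Nat.div2_succ_double.
  reflexivity.
Qed.

Lemma murec_odd : MuRec 1 (fun v => 2 * nth 0 v 0 + 1).
Proof.
  apply (murec1_of_expr (eadd (emul (EConst 2) (EVar 0)) (EConst 1)) (fun n => 2 * n + 1));
    reflexivity.
Qed.

(** * Type-2 machines from μ-recursive functions *)

(* The input of a machine computing output [n] after reading [k] symbols of [p]. *)
Definition query (n : nat) (p : Baire) (k : nat) : nat := npair n (lcode (prefix p k)).

Lemma computes_of_murec (F : nat -> nat) : MuRec 1 (fun v => F (nth 0 v 0)) ->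
  exists e, forall p q,
    (forall n, (exists k, F (query n p k) = S (q n)) /\
               (forall k, F (query n p k) = 0 \/ F (query n p k) = S (q n))) ->
    computes e p q.
Proof.
  intros [e He]. exists e. intros p q Hq n. destruct (Hq n) as [Hex Hval].
  destruct (epsilon_smallest (fun k => F (query n p k) <> 0)) as [k [Hk Hmin]].
  { intros k. destruct (Nat.eq_dec (F (query n p k)) 0); auto. }
  { destruct Hex as [k Hk]. exists k. congruence. }
  exists k. split.
  - destruct (Hval k) as [E|E]; [contradiction|]. rewrite <- E. apply (He [_]). reflexivity.
  - intros k' Hk'. replace 0 with (F (query n p k')).
    + apply (He [_]). reflexivity.
    + destruct (Nat.eq_dec (F (query n p k')) 0); [assumption|]. specialize (Hmin k'). lia.
Qed.

Lemma computes_bounded_use (H : nat -> (nat -> nat) -> nat) (B : nat -> nat) :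
  MuRec 2 (fun v => H (nth 0 v 0) (fun s => code_nth s (nth 1 v 0))) ->
  MuRec 1 (fun v => B (nth 0 v 0)) ->
  (forall n g g', (forall s, s < B n -> g s = g' s) -> H n g = H n g') ->
  exists e, forall p, computes e p (fun n => H n p).
Proof.
  intros HH HB Huse.
  set (E := eif (ele (EOp1 B HB (efst (EVar 0))) (elen (esnd (EVar 0))))
                (ESucc (EOp2 (fun n c => H n (fun s => code_nth s c)) HH
                          (efst (EVar 0)) (esnd (EVar 0))))
                (EConst 0)).
  destruct (computes_of_murec (fun z => eval_expr E [z])) as [e He].
  { apply murec1_expr. reflexivity. }
  exists e. intros p. apply He. intros n.
  assert (Hk : forall k, eval_expr E [query n p k] =
    nif (nle (B n) k) (S (H n (fun s => code_nth s (lcode (prefix p k))))) 0).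
  { intros k. unfold E, query. cbn [eval_expr nth].
    rewrite nunpair_npair. cbn [fst snd]. rewrite code_len_prefix. reflexivity. }
  assert (Hprefix : forall k, B n <= k -> H n (fun s => code_nth s (lcode (prefix p k))) = H n p).
  { intros k Hk'. apply Huse. intros s Hs. apply code_nth_prefix. lia. }
  unfold nle, nif in Hk. split.
  - exists (B n). rewrite Hk, Nat.leb_refl, Hprefix; auto.
  - intros k. rewrite Hk. destruct (Nat.leb_spec (B n) k); cbn [Nat.eqb]; [|auto].
    rewrite Hprefix; auto.
Qed.

Lemma computes_least_witness (C : nat -> nat -> (nat -> nat) -> nat) (B : nat -> nat -> nat) :
  MuRec 3 (fun v => C (nth 0 v 0) (nth 1 v 0) (fun s => code_nth s (nth 2 v 0))) ->
  MuRec 2 (fun v => B (nth 0 v 0) (nth 1 v 0)) ->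
  (forall n r g g', (forall s, s < B n r -> g s = g' s) -> C n r g = C n r g') ->
  (forall n r r', r <= r' -> B n r <= B n r') -> (forall n r, r < B n r) ->
  exists e, forall p s,
    (forall n, C n (s n) p <> 0 /\ forall r, r < s n -> C n r p = 0) -> computes e p s.
Proof.
  intros HC HB Huse Hmono Hlt.
  set (E := ELet (ESearch (eand (elt (EOp2 B HB (efst (EVar 1)) (EVar 0)) (elen (esnd (EVar 1))))
                                (EOp3 (fun n r c => C n r (fun s => code_nth s c)) HC
                                      (efst (EVar 1)) (EVar 0) (esnd (EVar 1))))
                          (elen (esnd (EVar 0))))
                 (eif (elt (EVar 0) (elen (esnd (EVar 1)))) (ESucc (EVar 0)) (EConst 0))).
  destruct (computes_of_murec (fun z => eval_expr E [z])) as [e He].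
  { apply murec1_expr. reflexivity. }
  exists e. intros p s Hs. apply He. intros n. destruct (Hs n) as [Hsn Hmin].
  set (Q := fun k r =>
    nonzero (nand (nle (S (B n r)) k) (C n r (fun t => code_nth t (lcode (prefix p k)))))).
  assert (Hk : forall k, eval_expr E [query n p k] =
    nif (nle (S (bsearch (Q k) k)) k) (S (bsearch (Q k) k)) 0).
  { intros k. unfold E, query. cbn [eval_expr nth].
    rewrite !nunpair_npair. cbn [fst snd]. rewrite code_len_prefix. reflexivity. }
  assert (HQ : forall k r, Q k r = true <-> B n r < k /\ C n r p <> 0).
  { intros k r. unfold Q. rewrite nonzero_true, nand_spec, nle_spec.
    assert (Hext : B n r < k -> C n r (fun t => code_nth t (lcode (prefix p k))) = C n r p).
    { intros Hr. apply Huse. intros t Ht. apply code_nth_prefix. lia. }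
    split; intros [Hr Hnz]; (split; [lia|]); [rewrite <- Hext | rewrite Hext]; assumption || lia. }
  assert (Hsearch : forall k, bsearch (Q k) k = if B n (s n) <? k then s n else k).
  { intros k. apply (bsearch_bounded_least (fun r => C n r p <> 0)); auto. }
  pose proof (Hlt n (s n)). unfold nle, nif in Hk. split.
  - exists (S (B n (s n))). rewrite Hk, Hsearch, (proj2 (Nat.ltb_lt _ _)) by lia.
    rewrite (proj2 (Nat.leb_le _ _)) by lia. reflexivity.
  - intros k. rewrite Hk, Hsearch. destruct (Nat.ltb_spec (B n (s n)) k).
    + rewrite (proj2 (Nat.leb_le _ _)) by lia. auto.
    + rewrite (proj2 (Nat.leb_gt _ _)) by lia. auto.
Qed.

Lemma computes_reindex (pi : nat -> nat) : MuRec 1 (fun v => pi (nth 0 v 0)) ->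
  exists e, forall p, computes e p (fun n => p (pi n)).
Proof.
  intros Hpi. apply (computes_bounded_use (fun n g => g (pi n)) (fun n => S (pi n))).
  - apply (murec2_of_expr (enth (EOp1 pi Hpi (EVar 0)) (EVar 1)) (fun n c => code_nth (pi n) c));
      reflexivity.
  - apply (murec_comp1 _ S); [apply murec_succ, murec_proj; lia | exact Hpi].
  - intros n g g' H. apply H. lia.
Qed.

(** * Exact rational arithmetic on codes *)

Definition neven (n : nat) : nat := if Nat.even n then 1 else 0.
Definition pow2 (n : nat) : nat := 2 ^ n.

Lemma murec_div2 : MuRec 1 (fun v => Nat.div2 (nth 0 v 0)).
Proof.
  (* div2 (k + 1) = k - div2 k *)
  apply (murec1_of_expr (ERec (EConst 0) (esub (EVar 0) (EVar 1)) (EVar 0))); [reflexivity|].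
  intros x. cbn [eval_expr nth]. induction x as [|x IH]; [reflexivity|]. cbn [nat_rect].
  rewrite IH. pose proof (Nat.div2_odd x). pose proof (Nat.div2_odd (S x)).
  rewrite Nat.odd_succ, <- Nat.negb_odd in *. destruct (Nat.odd x); simpl in *; lia.
Qed.

Notation ediv2 a := (EOp1 Nat.div2 murec_div2 a).

Lemma murec_neven : MuRec 1 (fun v => neven (nth 0 v 0)).
Proof.
  apply (murec1_of_expr (eeq (EVar 0) (emul (EConst 2) (ediv2 (EVar 0))))); [reflexivity|].
  intros x. cbn [eval_expr nth]. unfold neq, neven. pose proof (Nat.div2_odd x) as Hx.
  rewrite <- Nat.negb_odd. destruct (Nat.odd x); simpl in Hx;
    [rewrite (proj2 (Nat.eqb_neq _ _)) | rewrite (proj2 (Nat.eqb_eq _ _))]; simpl; lia.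
Qed.

Lemma murec_pow2 : MuRec 1 (fun v => pow2 (nth 0 v 0)).
Proof.
  apply (murec1_of_expr (ERec (EConst 1) (emul (EConst 2) (EVar 1)) (EVar 0))); [reflexivity|].
  intros x. cbn [eval_expr nth]. induction x as [|x IH]; [reflexivity|].
  cbn [nat_rect]. rewrite IH. reflexivity.
Qed.

Open Scope R_scope.

(* A triple [ntriple P N D] codes the rational (P - N) / (D + 1). *)
Definition qt_val (t : nat) : R := (INR (nfst3 t) - INR (nsnd3 t)) / INR (S (nthd3 t)).

Lemma qt_val_ntriple P N D : qt_val (ntriple P N D) = (INR P - INR N) / INR (S D).
Proof. unfold qt_val. rewrite nfst3_ntriple, nsnd3_ntriple, nthd3_ntriple. reflexivity. Qed.

Close Scope R_scope.

Definition qt_of_code (c : nat) : nat :=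
  let a := fst (nunpair c) in
  ntriple (nif (neven a) (Nat.div2 a) 0) (nif (neven a) 0 (Nat.div2 (S a))) (snd (nunpair c)).

Definition qt_add (x y : nat) : nat :=
  ntriple (nfst3 x * S (nthd3 y) + nfst3 y * S (nthd3 x))
          (nsnd3 x * S (nthd3 y) + nsnd3 y * S (nthd3 x))
          (S (nthd3 x) * S (nthd3 y) - 1).

Definition qt_opp (x : nat) : nat := ntriple (nsnd3 x) (nfst3 x) (nthd3 x).

Definition qt_halfpow (n : nat) : nat := ntriple 1 0 (pow2 n - 1).

Definition qt_le (x y : nat) : nat :=
  nle (nfst3 x * S (nthd3 y) + nsnd3 y * S (nthd3 x))
      (nfst3 y * S (nthd3 x) + nsnd3 x * S (nthd3 y)).

Lemma murec_qt_of_code : MuRec 1 (fun v => qt_of_code (nth 0 v 0)).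
Proof.
  apply (murec1_of_expr
    (etriple (eif (EOp1 neven murec_neven (efst (EVar 0))) (ediv2 (efst (EVar 0))) (EConst 0))
              (eif (EOp1 neven murec_neven (efst (EVar 0))) (EConst 0)
                   (ediv2 (ESucc (efst (EVar 0)))))
              (esnd (EVar 0)))); reflexivity.
Qed.

Lemma murec_qt_add : MuRec 2 (fun v => qt_add (nth 0 v 0) (nth 1 v 0)).
Proof.
  apply (murec2_of_expr
    (etriple (eadd (emul (efst3 (EVar 0)) (ESucc (ethd3 (EVar 1))))
                    (emul (efst3 (EVar 1)) (ESucc (ethd3 (EVar 0)))))
              (eadd (emul (esnd3 (EVar 0)) (ESucc (ethd3 (EVar 1))))
                    (emul (esnd3 (EVar 1)) (ESucc (ethd3 (EVar 0)))))
              (esub (emul (ESucc (ethd3 (EVar 0))) (ESucc (ethd3 (EVar 1)))) (EConst 1))));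
    reflexivity.
Qed.

Lemma murec_qt_opp : MuRec 1 (fun v => qt_opp (nth 0 v 0)).
Proof.
  apply (murec1_of_expr (etriple (esnd3 (EVar 0)) (efst3 (EVar 0)) (ethd3 (EVar 0))));
    reflexivity.
Qed.

Lemma murec_qt_halfpow : MuRec 1 (fun v => qt_halfpow (nth 0 v 0)).
Proof.
  apply (murec1_of_expr
    (etriple (EConst 1) (EConst 0) (esub (EOp1 pow2 murec_pow2 (EVar 0)) (EConst 1))));
    reflexivity.
Qed.

Lemma murec_qt_le : MuRec 2 (fun v => qt_le (nth 0 v 0) (nth 1 v 0)).
Proof.
  apply (murec2_of_expr
    (ele (eadd (emul (efst3 (EVar 0)) (ESucc (ethd3 (EVar 1))))
               (emul (esnd3 (EVar 1)) (ESucc (ethd3 (EVar 0)))))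
         (eadd (emul (efst3 (EVar 1)) (ESucc (ethd3 (EVar 0))))
               (emul (esnd3 (EVar 0)) (ESucc (ethd3 (EVar 1)))))));
    reflexivity.
Qed.

Notation eqt_of_code a := (EOp1 qt_of_code murec_qt_of_code a).
Notation eqt_add a b := (EOp2 qt_add murec_qt_add a b).
Notation eqt_opp a := (EOp1 qt_opp murec_qt_opp a).
Notation eqt_halfpow a := (EOp1 qt_halfpow murec_qt_halfpow a).
Notation eqt_le a b := (EOp2 qt_le murec_qt_le a b).

Open Scope R_scope.

Definition Qv (c : nat) : R := Q2R (qdec c).

Lemma INR_S_pos n : 0 < INR (S n).
Proof. apply lt_0_INR. lia. Qed.

Lemma qt_val_add x y : qt_val (qt_add x y) = qt_val x + qt_val y.
Proof.
  unfold qt_add. rewrite qt_val_ntriple. unfold qt_val.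
  replace (S (S (nthd3 x) * S (nthd3 y) - 1)) with (S (nthd3 x) * S (nthd3 y))%nat
    by (simpl; lia).
  rewrite !plus_INR, !mult_INR.
  pose proof (INR_S_pos (nthd3 x)). pose proof (INR_S_pos (nthd3 y)). field. lra.
Qed.

Lemma qt_val_opp x : qt_val (qt_opp x) = - qt_val x.
Proof.
  unfold qt_opp. rewrite qt_val_ntriple. unfold qt_val.
  pose proof (INR_S_pos (nthd3 x)). field. lra.
Qed.

Lemma qt_val_halfpow n : qt_val (qt_halfpow n) = (/ 2) ^ n.
Proof.
  unfold qt_halfpow, pow2. rewrite qt_val_ntriple.
  replace (S (2 ^ n - 1)) with (2 ^ n)%nat by (pose proof (Nat.pow_nonzero 2 n); lia).
  rewrite pow_INR, pow_inv. simpl (INR 1). simpl (INR 0). replace (INR 2) with 2 by (simpl; lra).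
  field. apply pow_nonzero. lra.
Qed.

Lemma qt_le_spec x y : qt_le x y <> 0%nat <-> qt_val x <= qt_val y.
Proof.
  unfold qt_le, nle, qt_val.
  pose proof (INR_S_pos (nthd3 x)) as Hx. pose proof (INR_S_pos (nthd3 y)) as Hy.
  assert (Hdiv : forall a b c d, 0 < c -> 0 < d -> (a / c <= b / d <-> a * d <= b * c)).
  { intros a b c d Hc Hd.
    replace (a / c) with (a * d / (c * d)) by (field; lra).
    replace (b / d) with (b * c / (c * d)) by (field; lra).
    split; intros H.
    - apply Rmult_le_compat_r with (r := c * d) in H; [|nra].
      unfold Rdiv in H. rewrite !Rmult_assoc, Rinv_l in H by nra. lra.
    - unfold Rdiv. apply Rmult_le_compat_r; [|exact H].
      apply Rlt_le, Rinv_0_lt_compat. nra. }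
  rewrite Hdiv by auto.
  destruct (Nat.leb_spec (nfst3 x * S (nthd3 y) + nsnd3 y * S (nthd3 x))
                         (nfst3 y * S (nthd3 x) + nsnd3 x * S (nthd3 y))) as [H|H].
  - apply le_INR in H. rewrite !plus_INR, !mult_INR in H. split; [intros _; lra | lia].
  - apply lt_INR in H. rewrite !plus_INR, !mult_INR in H. split; [lia | intros; lra].
Qed.

Lemma qt_lt_spec x y : qt_le y x = 0%nat <-> qt_val x < qt_val y.
Proof.
  pose proof (qt_le_spec y x) as Hle. split; intros H.
  - destruct (Rlt_le_dec (qt_val x) (qt_val y)) as [|Hyx]; [assumption|].
    apply Hle in Hyx. contradiction.
  - destruct (Nat.eq_dec (qt_le y x) 0) as [|Hne]; [assumption|]. apply Hle in Hne. lra.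
Qed.

Lemma qt_val_of_code c : qt_val (qt_of_code c) = Qv c.
Proof.
  unfold Qv, qdec, qt_of_code. destruct (nunpair c) as [a b]. cbn [fst snd].
  rewrite qt_val_ntriple. unfold Q2R. cbn [Qnum Qden].
  replace (Z.pos (Pos.of_succ_nat b)) with (Z.of_nat (S b)) by lia. rewrite <- INR_IZR_INZ.
  unfold zdec, neven, nif. destruct (Nat.even a); cbn.
  - rewrite <- INR_IZR_INZ. simpl (INR 0). unfold Rdiv. ring.
  - rewrite opp_IZR, <- INR_IZR_INZ. simpl (INR 0). unfold Rdiv. ring.
Qed.

(** * Rational approximation and distance *)

Lemma Qv_code (z : Z) (b : nat) : exists c, Qv c = IZR z / INR (S b).
Proof.
  assert (Hz : exists a, zdec a = z).
  { unfold zdec. destruct (Z.le_gt_cases 0 z).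
    - exists (2 * Z.to_nat z)%nat. rewrite Nat.even_mul, Nat.div2_double. cbn [Nat.even orb].
      lia.
    - exists (S (2 * (Z.to_nat (- z) - 1)))%nat.
      rewrite Nat.even_succ, Nat.odd_mul. cbn [Nat.odd Nat.even negb andb].
      replace (S (S (2 * (Z.to_nat (- z) - 1)))) with (2 * Z.to_nat (- z))%nat by lia.
      rewrite Nat.div2_double. lia. }
  destruct Hz as [a Ha]. exists (npair a b). unfold Qv, qdec. rewrite nunpair_npair.
  unfold Q2R. cbn [Qnum Qden]. rewrite Ha.
  replace (Z.pos (Pos.of_succ_nat b)) with (Z.of_nat (S b)) by lia.
  rewrite <- INR_IZR_INZ. reflexivity.
Qed.

Lemma Qv_dense a b : a < b -> exists c, a < Qv c < b.
Proof.
  intros Hab. destruct (archimed_cor1 (b - a)) as [N [HN HN0]]; [lra|].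
  pose proof (INR_S_pos (pred N)) as Hpos. replace (S (pred N)) with N in Hpos by lia.
  destruct (archimed (a * INR N)) as [Hup1 Hup2].
  destruct (Qv_code (up (a * INR N)) (pred N)) as [c Hc]. exists c.
  rewrite Hc. replace (S (pred N)) with N by lia.
  split.
  - apply Rmult_lt_reg_r with (INR N); [exact Hpos|].
    unfold Rdiv. rewrite Rmult_assoc, Rinv_l by lra. lra.
  - apply Rle_lt_trans with (a + / INR N); [|lra].
    apply Rmult_le_reg_r with (INR N); [exact Hpos|].
    unfold Rdiv. rewrite Rmult_assoc, Rinv_l, Rmult_plus_distr_r, Rinv_l by lra. lra.
Qed.

Lemma halfpow_pos j : 0 < (/ 2) ^ j.
Proof. apply pow_lt. lra. Qed.

Lemma halfpow_small e : 0 < e -> exists j, (/ 2) ^ j < e.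
Proof.
  intros He. destruct (archimed_cor1 e He) as [N [HN HN0]]. exists N.
  rewrite pow_inv. apply Rle_lt_trans with (/ INR N); [|exact HN].
  apply Rinv_le_contravar; [apply lt_0_INR; lia|].
  clear. induction N as [|N IH]; [simpl; lra|]. rewrite S_INR. simpl.
  assert (1 <= 2 ^ N) by (apply pow_R1_Rle; lra). lra.
Qed.

Lemma Rabs_le_iff a b : Rabs a <= b <-> - b <= a <= b.
Proof. unfold Rabs. destruct (Rcase_abs a); split; intros; lra. Qed.

Lemma is_dist_exists x (A : R -> Prop) : (exists a, A a) -> exists d, is_dist x A d.
Proof.
  intros [a0 Ha0].
  destruct (completeness (fun r => exists a, A a /\ r = - Rabs (x - a))) as [m [Hub Hlub]].
  - exists 0. intros r [a [_ ->]]. pose proof (Rabs_pos (x - a)). lra.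
  - exists (- Rabs (x - a0)). eauto.
  - exists (- m). split.
    + intros a Ha. assert (- Rabs (x - a) <= m) by (apply Hub; eauto). lra.
    + intros e He. enough (m <= - e) by lra.
      apply Hlub. intros r [a [Ha ->]]. specialize (He a Ha). lra.
Qed.

Lemma is_dist_nonneg x A d : is_dist x A d -> 0 <= d.
Proof. intros [_ H]. apply H. intros a _. apply Rabs_pos. Qed.

Lemma is_dist_lt x A d s : is_dist x A d -> (exists y, A y /\ Rabs (x - y) < s) <-> d < s.
Proof.
  intros [Hlb Hglb]. split.
  - intros [y [Hy Hs]]. specialize (Hlb y Hy). lra.
  - intros Hd. apply Classical_Prop.NNPP. intros Hno.
    enough (s <= d) by lra. apply Hglb. intros a Ha.
    destruct (Rle_lt_dec s (Rabs (x - a))); [assumption|]. exfalso. eauto.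
Qed.

Lemma closed_set_avoid (A : R -> Prop) y :
  closed_set A -> ~ A y -> exists e, 0 < e /\ forall z, Rabs (z - y) < e -> ~ A z.
Proof. intros Hc Hy. destruct (Hc y Hy) as [[e He] H]. exists e. split; [exact He|]. exact H. Qed.

(* If neither [x - d] nor [x + d] lies in the closed set [A], a neighbourhood of both misses
   [A], so [d] is not the infimum. *)
Lemma is_dist_attained x A d :
  closed_set A -> is_dist x A d -> A (x - d) \/ A (x + d).
Proof.
  intros Hc Hd. pose proof (is_dist_nonneg x A d Hd) as Hd0.
  apply Classical_Prop.NNPP. intros Hno. apply Classical_Prop.not_or_and in Hno as [HL HR].
  destruct (closed_set_avoid A _ Hc HL) as [e1 [He1 N1]].
  destruct (closed_set_avoid A _ Hc HR) as [e2 [He2 N2]].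
  pose proof (Rmin_l e1 e2). pose proof (Rmin_r e1 e2).
  set (e := Rmin e1 e2) in *. assert (0 < e) by (apply Rmin_glb_lt; auto).
  enough (d + e <= d) by lra. apply (proj2 Hd). intros a Ha. pose proof (proj1 Hd a Ha) as Hda.
  destruct (Rle_lt_dec (d + e) (Rabs (x - a))) as [|Hlt]; [assumption|]. exfalso.
  destruct (Rle_lt_dec a x).
  - rewrite Rabs_right in Hda, Hlt by lra. apply (N1 a); [apply Rabs_def1; lra | exact Ha].
  - rewrite Rabs_left in Hda, Hlt by lra. apply (N2 a); [apply Rabs_def1; lra | exact Ha].
Qed.

(** * Atoms: the Σ⁰₁ facts about a point and a closed set *)

Close Scope R_scope.

Definition rho (w : nat) : nat :=
  qt_add (qt_of_code (nfst3 w))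
         (nif (nthd3 w) (qt_opp (qt_halfpow (nsnd3 w))) (qt_halfpow (nsnd3 w))).

Lemma murec_rho : MuRec 1 (fun v => rho (nth 0 v 0)).
Proof.
  apply (murec1_of_expr (eqt_add (eqt_of_code (efst3 (EVar 0)))
    (eif (ethd3 (EVar 0)) (eqt_opp (eqt_halfpow (esnd3 (EVar 0))))
                          (eqt_halfpow (esnd3 (EVar 0)))))); reflexivity.
Qed.

Notation erho a := (EOp1 rho murec_rho a).

(* the rational interval listed by an entry [em = S k] of a name in A_+(R) *)
Definition ivl_lo (em : nat) : nat := fst (nunpair (pred em)).
Definition ivl_hi (em : nat) : nat := snd (nunpair (pred em)).

(* [atom_test a (npair c em) j] decides whether the [j]-th Cauchy approximation [c] of x and
   the entry [em] of the enumeration of A witness the atom [a] (see [atom] below). *)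
Definition atom_test_expr : expr :=
  let a := EVar 0 in let ce := EVar 1 in let j := EVar 2 in
  let w := esnd a in let c := efst ce in let em := esnd ce in
  let u := eqt_of_code (efst (epred em)) in let v := eqt_of_code (esnd (epred em)) in
  let xlo := eqt_add (eqt_of_code c) (eqt_opp (eqt_halfpow j)) in
  let xhi := eqt_add (eqt_of_code c) (eqt_halfpow j) in
  let r1 := erho (efst3 w) in let r2 := erho (esnd3 w) in let r3 := erho (ethd3 w) in
  eif (eeq (efst a) (EConst 0))
    (eand em (eand (eqt_le (erho w) u) (eqt_le v (eqt_add (eqt_add xlo xlo) (eqt_opp (erho w))))))
  (eif (eeq (efst a) (EConst 1))
    (eand em (eand (eqt_le (eqt_add (eqt_add xhi xhi) (eqt_opp (erho w))) u) (eqt_le v (erho w))))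
  (eif (eeq (efst a) (EConst 2))
    (eor (enot (eand (enot (eqt_le r2 r1)) (enot (eqt_le r3 r2))))
         (eand em (eand (eqt_le r1 u) (eqt_le v r3))))
    (EConst 0))).

Definition atom_test (a ce j : nat) : nat := eval_expr atom_test_expr [a; ce; j].

Lemma murec_atom_test : MuRec 3 (fun v => atom_test (nth 0 v 0) (nth 1 v 0) (nth 2 v 0)).
Proof. exact (murec3_of_expr atom_test_expr atom_test eq_refl (fun _ _ _ => eq_refl)). Qed.

Open Scope R_scope.

Definition rhoR (w : nat) : R := qt_val (rho w).

Lemma rhoR_ntriple c n s :
  rhoR (ntriple c n s) = Qv c + (if (s =? 0)%nat then 1 else -1) * (/ 2) ^ n.
Proof.
  unfold rhoR, rho. rewrite nfst3_ntriple, nsnd3_ntriple, nthd3_ntriple, qt_val_add,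
    qt_val_of_code.
  unfold nif. destruct (s =? 0)%nat; rewrite ?qt_val_opp, qt_val_halfpow; ring.
Qed.

Lemma rhoR_dense a b : a < b -> exists w, a < rhoR w < b.
Proof.
  intros Hab. destruct (Qv_dense (a - 1) (b - 1)) as [c Hc]; [lra|].
  exists (ntriple c 0 0). rewrite rhoR_ntriple. simpl. lra.
Qed.

Definition Qlo (em : nat) : R := Qv (ivl_lo em).
Definition Qhi (em : nat) : R := Qv (ivl_hi em).

Ltac atom_test_unfold :=
  unfold atom_test, atom_test_expr; cbn [eval_expr nth]; rewrite !nunpair_npair; cbn [fst snd];
  unfold neq; cbn [Nat.eqb]; rewrite ?nif_S, ?nif_0; unfold Qlo, Qhi, ivl_lo, ivl_hi.

Lemma atom_test_left w c em j : (atom_test (npair 0 w) (npair c em) j <> 0)%nat <->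
  em <> 0%nat /\ rhoR w <= Qlo em /\ Qhi em <= 2 * (Qv c - (/ 2) ^ j) - rhoR w.
Proof.
  atom_test_unfold.
  rewrite !nand_spec, !qt_le_spec, !qt_val_add, !qt_val_opp, !qt_val_of_code, qt_val_halfpow.
  fold (rhoR w). split; intros [? [? ?]]; repeat split; auto; lra.
Qed.

Lemma atom_test_right w c em j : (atom_test (npair 1 w) (npair c em) j <> 0)%nat <->
  em <> 0%nat /\ 2 * (Qv c + (/ 2) ^ j) - rhoR w <= Qlo em /\ Qhi em <= rhoR w.
Proof.
  atom_test_unfold.
  rewrite !nand_spec, !qt_le_spec, !qt_val_add, !qt_val_opp, !qt_val_of_code, qt_val_halfpow.
  fold (rhoR w). split; intros [? [? ?]]; repeat split; auto; lra.
Qed.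

Lemma atom_test_gap w c em j : (atom_test (npair 2 w) (npair c em) j <> 0)%nat <->
  ~ (rhoR (nfst3 w) < rhoR (nsnd3 w) < rhoR (nthd3 w)) \/
  (em <> 0%nat /\ rhoR (nfst3 w) <= Qlo em /\ Qhi em <= rhoR (nthd3 w)).
Proof.
  atom_test_unfold.
  rewrite nor_spec, nnot_spec, !nand_spec, !qt_le_spec, !qt_val_of_code.
  assert (Hnot : forall a b, nand (nnot a) (nnot b) = 0%nat <-> ~ (a = 0%nat /\ b = 0%nat)).
  { intros a b. unfold nif. destruct a, b; simpl; split; intros; intuition lia. }
  rewrite Hnot, !qt_lt_spec. fold (rhoR (nfst3 w)) (rhoR (nsnd3 w)) (rhoR (nthd3 w)).
  reflexivity.
Qed.

Lemma atom_test_other t w c em j : (t > 2)%nat -> atom_test (npair t w) (npair c em) j = 0%nat.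
Proof.
  intros Ht. destruct t as [|[|[|t]]]; [lia .. |]. atom_test_unfold. reflexivity.
Qed.

Definition meets_between (A : R -> Prop) (a b : R) : Prop := exists y, A y /\ a < y < b.

(* Atom [npair 0 w] says rho_w < x - d(x, A), atom [npair 1 w] says x + d(x, A) < rho_w
   (see [atom_left_iff], [atom_right_iff]); atom [npair 2 w] with [w] a triple says that
   rho_w1 < rho_w2 < rho_w3 fails or A meets (rho_w1, rho_w3). *)
Definition atom (x : R) (A : R -> Prop) (a : nat) : Prop :=
  let w := snd (nunpair a) in
  match fst (nunpair a) with
  | 0%nat => meets_between A (rhoR w) (2 * x - rhoR w)
  | 1%nat => meets_between A (2 * x - rhoR w) (rhoR w)
  | 2%nat => ~ (rhoR (nfst3 w) < rhoR (nsnd3 w) < rhoR (nthd3 w)) \/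
             meets_between A (rhoR (nfst3 w)) (rhoR (nthd3 w))
  | _ => False
  end.

Lemma Aplus_listed p A m em : Aplus p A -> p m = em -> em <> 0%nat ->
  meets_between A (Qlo em) (Qhi em).
Proof.
  intros [_ HA] Hm Hem. destruct em as [|k]; [contradiction|].
  assert (Hk : meets A k) by (apply HA; eauto). unfold meets in Hk.
  unfold Qlo, Qhi, ivl_lo, ivl_hi. cbn [pred]. destruct (nunpair k). exact Hk.
Qed.

Lemma Aplus_lists p A cu cv y : Aplus p A -> A y -> Qv cu < y < Qv cv ->
  exists m, p m <> 0%nat /\ Qlo (p m) = Qv cu /\ Qhi (p m) = Qv cv.
Proof.
  intros [_ HA] Hy Hcuv.
  assert (Hm : meets A (npair cu cv)) by (unfold meets; rewrite nunpair_npair; eauto).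
  apply HA in Hm as [m Hm]. exists m. rewrite Hm. unfold Qlo, Qhi, ivl_lo, ivl_hi. cbn [pred].
  rewrite nunpair_npair. split; [lia | auto].
Qed.

Section AtomWitnesses.

Variables (p : Baire) (x : R) (A : R -> Prop).
Hypothesis Hx : cauchy (beven p) x.
Hypothesis HA : Aplus (bodd p) A.

Definition witnesses (a : nat) : Prop :=
  exists j m, atom_test a (npair (p (2 * j)%nat) (p (2 * m + 1)%nat)) j <> 0%nat.

Let approx j : - (/ 2) ^ j <= Qv (p (2 * j)%nat) - x <= (/ 2) ^ j.
Proof. apply Rabs_le_iff, Hx. Qed.

Let listed m : p (2 * m + 1)%nat <> 0%nat ->
  meets_between A (Qlo (p (2 * m + 1)%nat)) (Qhi (p (2 * m + 1)%nat)).
Proof. apply (Aplus_listed (bodd p) A m); [exact HA | reflexivity]. Qed.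

Let lists cu cv y : A y -> Qv cu < y < Qv cv ->
  exists m, p (2 * m + 1)%nat <> 0%nat /\
    Qlo (p (2 * m + 1)%nat) = Qv cu /\ Qhi (p (2 * m + 1)%nat) = Qv cv.
Proof. apply (Aplus_lists (bodd p)). exact HA. Qed.

Lemma witnesses_left w : witnesses (npair 0 w) <-> atom x A (npair 0 w).
Proof.
  unfold witnesses, atom. rewrite nunpair_npair. cbn [fst snd]. split.
  - intros [j [m Htest]]. apply atom_test_left in Htest as [Hem [Hlo Hhi]].
    destruct (listed m Hem) as [y [Hy Hlohi]]. exists y. pose proof (approx j). split; [auto | lra].
  - intros [y [Hy [Hlo Hhi]]].
    (* the enumerated interval and the approximation error must fit into the gap *)
    destruct (halfpow_small ((2 * x - rhoR w - y) / 4)) as [j Hj]; [lra|].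
    destruct (Qv_dense (rhoR w) y) as [cu Hcu]; [lra|].
    destruct (Qv_dense y (2 * x - rhoR w - 4 * (/ 2) ^ j)) as [cv Hcv]; [lra|].
    destruct (lists cu cv y Hy) as [m [Hem [Hu Hv]]]; [lra|].
    exists j, m. apply atom_test_left. rewrite Hu, Hv. pose proof (approx j).
    split; [exact Hem | split; lra].
Qed.

Lemma witnesses_right w : witnesses (npair 1 w) <-> atom x A (npair 1 w).
Proof.
  unfold witnesses, atom. rewrite nunpair_npair. cbn [fst snd]. split.
  - intros [j [m Htest]]. apply atom_test_right in Htest as [Hem [Hlo Hhi]].
    destruct (listed m Hem) as [y [Hy Hlohi]]. exists y. pose proof (approx j). split; [auto | lra].
  - intros [y [Hy [Hlo Hhi]]].
    destruct (halfpow_small ((y - (2 * x - rhoR w)) / 4)) as [j Hj]; [lra|].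
    destruct (Qv_dense (2 * x - rhoR w + 4 * (/ 2) ^ j) y) as [cu Hcu]; [lra|].
    destruct (Qv_dense y (rhoR w)) as [cv Hcv]; [lra|].
    destruct (lists cu cv y Hy) as [m [Hem [Hu Hv]]]; [lra|].
    exists j, m. apply atom_test_right. rewrite Hu, Hv. pose proof (approx j).
    split; [exact Hem | split; lra].
Qed.

Lemma witnesses_gap w : witnesses (npair 2 w) <-> atom x A (npair 2 w).
Proof.
  unfold witnesses, atom. rewrite nunpair_npair. cbn [fst snd]. split.
  - intros [j [m Htest]]. apply atom_test_gap in Htest as [Hord|[Hem [Hlo Hhi]]]; [now left|].
    right. destruct (listed m Hem) as [y [Hy Hlohi]]. exists y. split; [auto | lra].
  - intros [Hord|[y [Hy Hy13]]].
    + exists 0%nat, 0%nat. apply atom_test_gap. now left.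
    + destruct (Qv_dense (rhoR (nfst3 w)) y) as [cu Hcu]; [lra|].
      destruct (Qv_dense y (rhoR (nthd3 w))) as [cv Hcv]; [lra|].
      destruct (lists cu cv y Hy) as [m [Hem [Hu Hv]]]; [lra|].
      exists 0%nat, m. apply atom_test_gap. right. rewrite Hu, Hv.
      split; [exact Hem | split; lra].
Qed.

Lemma witnesses_atom a : witnesses a <-> atom x A a.
Proof.
  rewrite <- (npair_nunpair a). generalize (snd (nunpair a)). intros w.
  destruct (fst (nunpair a)) as [|[|[|t]]].
  - apply witnesses_left.
  - apply witnesses_right.
  - apply witnesses_gap.
  - unfold witnesses, atom. rewrite nunpair_npair. cbn [fst snd]. split; [|tauto].
    intros [j [m Htest]]. rewrite atom_test_other in Htest by lia. contradiction.
Qed.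

End AtomWitnesses.

Close Scope R_scope.

(** * The limit stage *)

Definition witness_at (a : nat) (g : nat -> nat) (i t : nat) : nat :=
  let j := fst (nunpair t) in let m := snd (nunpair t) in
  nand (nle (S (2 * j)) i)
       (nand (nle (S (2 * m + 1)) i) (atom_test a (npair (g (2 * j)) (g (2 * m + 1))) j)).

(* Some witness for the atom [a] is found among the first [i] entries of [g]. *)
Definition witnessed (i a : nat) (g : nat -> nat) : nat := exists_below i (witness_at a g i).

Lemma murec_witnessed :
  MuRec 3 (fun v => witnessed (nth 0 v 0) (nth 1 v 0) (fun s => code_nth s (nth 2 v 0))).
Proof.
  apply (murec3_of_expr
    (let j := efst (EVar 0) in let m := esnd (EVar 0) in let i := EVar 1 in let c := EVar 3 in
     elt (ESearch (eand (elt (emul (EConst 2) j) i)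
                  (eand (elt (eadd (emul (EConst 2) m) (EConst 1)) i)
                        (EOp3 atom_test murec_atom_test (EVar 2)
                           (epair (enth (emul (EConst 2) j) c)
                                  (enth (eadd (emul (EConst 2) m) (EConst 1)) c))
                           j)))
         (EVar 0)) (EVar 0))
    (fun i a c => witnessed i a (fun s => code_nth s c))); reflexivity.
Qed.

Lemma witnessed_spec i a g : witnessed i a g <> 0 <->
  exists j m, npair j m < i /\ 2 * j < i /\ 2 * m + 1 < i /\
    atom_test a (npair (g (2 * j)) (g (2 * m + 1))) j <> 0.
Proof.
  unfold witnessed. rewrite exists_below_spec. unfold witness_at. split.
  - intros [t [Ht Hw]]. rewrite !nand_spec, !nle_spec in Hw.
    exists (fst (nunpair t)), (snd (nunpair t)). rewrite npair_nunpair. repeat split; tauto || lia.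
  - intros [j [m [Hjm [Hj [Hm Htest]]]]]. exists (npair j m). rewrite nunpair_npair. cbn [fst snd].
    rewrite !nand_spec, !nle_spec. repeat split; assumption || lia.
Qed.

Lemma witnessed_mono i i' a g : i <= i' -> witnessed i a g <> 0 -> witnessed i' a g <> 0.
Proof.
  intros Hii'. rewrite !witnessed_spec. intros [j [m Hjm]]. exists j, m. repeat split; lia || tauto.
Qed.

Lemma witnessed_ext i a g g' :
  (forall s, s < i -> g s = g' s) -> witnessed i a g = witnessed i a g'.
Proof.
  intros Hgg'. apply exists_below_ext. intros t _. unfold witness_at, nle.
  destruct (Nat.leb_spec (S (2 * fst (nunpair t))) i); [|reflexivity].
  destruct (Nat.leb_spec (S (2 * snd (nunpair t) + 1)) i); [|reflexivity].
  rewrite !Hgg' by lia. reflexivity.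
Qed.

Lemma witnessed_eventually p a : (exists i, witnessed i a p <> 0) <-> witnesses p a.
Proof.
  unfold witnesses. split.
  - intros [i Hi]. apply witnessed_spec in Hi as [j [m Hjm]]. exists j, m. tauto.
  - intros [j [m Htest]]. exists (npair j m + 2 * j + 2 * m + 2). apply witnessed_spec.
    exists j, m. repeat split; auto; lia.
Qed.

Lemma computes_witnessed :
  exists e, forall p, computes e p (fun N => witnessed (fst (nunpair N)) (snd (nunpair N)) p).
Proof.
  apply (computes_bounded_use (fun N g => witnessed (fst (nunpair N)) (snd (nunpair N)) g)
                              (fun N => fst (nunpair N))).
  - apply (murec2_of_expr
      (EOp3 (fun i a c => witnessed i a (fun s => code_nth s c)) murec_witnessed
            (efst (EVar 0)) (esnd (EVar 0)) (EVar 1))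
      (fun N c => witnessed (fst (nunpair N)) (snd (nunpair N)) (fun s => code_nth s c)));
      reflexivity.
  - exact murec_nfst.
  - intros N g g'. apply witnessed_ext.
Qed.

Definition indicator (P : nat -> Prop) (a : nat) : nat :=
  if excluded_middle_informative (P a) then 1 else 0.

Lemma baire_conv_monotone (X : nat -> Baire) :
  (forall i a, X i a = 0 \/ X i a = 1) ->
  (forall i i' a, i <= i' -> X i a <> 0 -> X i' a <> 0) ->
  baire_conv X (indicator (fun a => exists i, X i a <> 0)).
Proof.
  intros H01 Hmono k. induction k as [|k [N HN]]; [exists 0; intros; lia|].
  unfold indicator in *.
  destruct (excluded_middle_informative (exists i, X i k <> 0)) as [[i0 Hi0]|Hno].
  - exists (Nat.max N i0). intros i Hi n Hn.
    destruct (Nat.eq_dec n k) as [->|]; [|apply HN; lia].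
    destruct (excluded_middle_informative _) as [_|Hf]; [|exfalso; eauto].
    destruct (H01 i k) as [E|E]; [|exact E]. exfalso. apply (Hmono i0 i k); [lia | auto | auto].
  - exists N. intros i Hi n Hn. destruct (Nat.eq_dec n k) as [->|]; [|apply HN; lia].
    destruct (excluded_middle_informative _) as [Ht|_]; [contradiction|].
    destruct (H01 i k) as [E|E]; [exact E|]. exfalso. apply Hno. exists i. lia.
Qed.

Lemma baire_conv_unique X y y' : baire_conv X y -> baire_conv X y' -> forall a, y a = y' a.
Proof.
  intros Hy Hy' a. destruct (Hy (S a)) as [N HN]. destruct (Hy' (S a)) as [N' HN'].
  rewrite <- (HN (N + N')), <- (HN' (N + N')); auto; lia.
Qed.

Open Scope R_scope.

Definition atom_name (chi : Baire) (xa : R * (R -> Prop)) : Prop :=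
  forall a, (chi a = 1%nat /\ atom (fst xa) (snd xa) a) \/
            (chi a = 0%nat /\ ~ atom (fst xa) (snd xa) a).

Definition AtomS : rspace := RSpace (R * (R -> Prop)) atom_name.

Definition ProjAtoms : mvf AtomS RS := MVF AtomS RS (mdom ProjR) (mval ProjR).

Definition to_atoms : mvf RxAplusS AtomS :=
  MVF RxAplusS AtomS (mdom ProjR) (fun xa xa' => xa' = xa).

Lemma Wred_to_atoms_lim : Wred to_atoms lim.
Proof.
  destruct computes_witnessed as [eK HK].
  destruct (computes_reindex (fun n => 2 * n + 1)%nat murec_odd) as [eH HH].
  exists eK, eH. intros G HG p [x A] [Hx HA] _. cbn [fst snd] in *.
  set (q := fun N => witnessed (fst (nunpair N)) (snd (nunpair N)) p).
  set (X := fun i a => q (npair i a)).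
  assert (HX : forall i a, X i a = witnessed i a p).
  { intros i a. unfold X, q. rewrite nunpair_npair. reflexivity. }
  set (y := indicator (fun a => exists i, X i a <> 0%nat)).
  assert (Hconv : baire_conv X y).
  { apply baire_conv_monotone; intros; rewrite !HX in *;
      [apply exists_below_01 | eapply witnessed_mono; eauto]. }
  destruct (HG q X) as [y' [Hy' Hconv']]; [reflexivity | exists y; exact Hconv|].
  simpl in Hy'. subst y'.
  exists q, (fun n => bpair p (G q) (2 * n + 1)%nat). split; [apply HK|split; [apply HH|]].
  exists (x, A). split; [|reflexivity]. intros a. cbn beta. rewrite bpair_odd.
  rewrite <- (baire_conv_unique X y (G q) Hconv Hconv' a).
  assert (Hatom : (exists i, X i a <> 0%nat) <-> atom x A a).
  { rewrite <- (witnesses_atom p x A Hx HA a), <- witnessed_eventually.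
    split; intros [i Hi]; exists i; rewrite HX in *; exact Hi. }
  unfold y, indicator. destruct (excluded_middle_informative _); [left | right]; split; tauto.
Qed.

(** * The LLPO stage *)

Lemma atom_left_iff x A d w : is_dist x A d -> atom x A (npair 0 w) <-> rhoR w < x - d.
Proof.
  intros Hd. unfold atom. rewrite nunpair_npair. cbn [fst snd].
  transitivity (d < x - rhoR w); [|lra]. rewrite <- (is_dist_lt x A d _ Hd).
  split; intros [y [Hy Hxy]]; exists y; split; auto.
  - apply Rabs_def1; lra.
  - apply Rabs_def2 in Hxy. lra.
Qed.

Lemma atom_right_iff x A d w : is_dist x A d -> atom x A (npair 1 w) <-> x + d < rhoR w.
Proof.
  intros Hd. unfold atom. rewrite nunpair_npair. cbn [fst snd].
  transitivity (d < rhoR w - x); [|lra]. rewrite <- (is_dist_lt x A d _ Hd).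
  split; intros [y [Hy Hxy]]; exists y; split; auto.
  - apply Rabs_def1; lra.
  - apply Rabs_def2 in Hxy. lra.
Qed.

Lemma atom_gap_iff x A m : atom x A (npair 2 m) <->
  ~ (rhoR (nfst3 m) < rhoR (nsnd3 m) < rhoR (nthd3 m)) \/
  meets_between A (rhoR (nfst3 m)) (rhoR (nthd3 m)).
Proof. unfold atom. rewrite nunpair_npair. reflexivity. Qed.

Section AtomName.

Variables (chi : Baire) (x : R) (A : R -> Prop).
Hypothesis Hchi : atom_name chi (x, A).

Lemma atom_name_01 a : chi a = 0%nat \/ chi a = 1%nat.
Proof. destruct (Hchi a) as [[E _]|[E _]]; auto. Qed.

Lemma atom_name_1 a : chi a = 1%nat <-> atom x A a.
Proof. destruct (Hchi a) as [[E Ha]|[E Ha]]; rewrite E; split; intros; auto; lia || tauto. Qed.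

Lemma atom_name_0 a : chi a = 0%nat <-> ~ atom x A a.
Proof. destruct (Hchi a) as [[E Ha]|[E Ha]]; rewrite E; split; intros; auto; lia || tauto. Qed.

End AtomName.

Close Scope R_scope.

(* With [m = ntriple w1 w2 w3], [left_gap chi m] certifies rho_w1 < x - d <= rho_w2 < rho_w3
   and that A misses (rho_w1, rho_w3), hence x - d is not in A; symmetrically for x + d. *)
Definition left_gap (g : nat -> nat) (m : nat) : nat :=
  g (npair 0 (nfst3 m)) * (1 - g (npair 0 (nsnd3 m))) * (1 - g (npair 2 m)).
Definition right_gap (g : nat -> nat) (m : nat) : nat :=
  g (npair 1 (nthd3 m)) * (1 - g (npair 1 (nsnd3 m))) * (1 - g (npair 2 m)).
Definition gap (g : nat -> nat) (m : nat) : nat := left_gap g m + right_gap g m.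
Definition no_gap_below (g : nat -> nat) (m : nat) : nat := 1 - exists_below m (gap g).

(* Only the first gap certificate is passed on, so at most one entry of the LLPO instance is
   nonzero. *)
Definition llpo_left (g : nat -> nat) (m : nat) : nat := left_gap g m * no_gap_below g m.
Definition llpo_right (g : nat -> nat) (m : nat) : nat :=
  right_gap g m * (1 - left_gap g m) * no_gap_below g m.
Definition llpo_instance (g : nat -> nat) : Baire := bpair (llpo_left g) (llpo_right g).

Lemma murec_left_gap : MuRec 2 (fun v => left_gap (fun s => code_nth s (nth 1 v 0)) (nth 0 v 0)).
Proof.
  apply (murec2_of_expr
    (emul (emul (enth (epair (EConst 0) (efst3 (EVar 0))) (EVar 1))
                (enot (enth (epair (EConst 0) (esnd3 (EVar 0))) (EVar 1))))
          (enot (enth (epair (EConst 2) (EVar 0)) (EVar 1))))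
    (fun m c => left_gap (fun s => code_nth s c) m)); reflexivity.
Qed.

Lemma murec_right_gap : MuRec 2 (fun v => right_gap (fun s => code_nth s (nth 1 v 0)) (nth 0 v 0)).
Proof.
  apply (murec2_of_expr
    (emul (emul (enth (epair (EConst 1) (ethd3 (EVar 0))) (EVar 1))
                (enot (enth (epair (EConst 1) (esnd3 (EVar 0))) (EVar 1))))
          (enot (enth (epair (EConst 2) (EVar 0)) (EVar 1))))
    (fun m c => right_gap (fun s => code_nth s c) m)); reflexivity.
Qed.

Notation eleft_gap a b := (EOp2 (fun m c => left_gap (fun s => code_nth s c) m) murec_left_gap a b).
Notation eright_gap a b :=
  (EOp2 (fun m c => right_gap (fun s => code_nth s c) m) murec_right_gap a b).

Lemma murec_no_gap_below :
  MuRec 2 (fun v => no_gap_below (fun s => code_nth s (nth 1 v 0)) (nth 0 v 0)).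
Proof.
  apply (murec2_of_expr
    (enot (elt (ESearch (eadd (eleft_gap (EVar 0) (EVar 2)) (eright_gap (EVar 0) (EVar 2)))
                        (EVar 0))
               (EVar 0)))
    (fun m c => no_gap_below (fun s => code_nth s c) m)); reflexivity.
Qed.

Notation eno_gap_below a b :=
  (EOp2 (fun m c => no_gap_below (fun s => code_nth s c) m) murec_no_gap_below a b).

Lemma murec_llpo_instance :
  MuRec 2 (fun v => llpo_instance (fun s => code_nth s (nth 1 v 0)) (nth 0 v 0)).
Proof.
  apply (murec2_of_expr
    (let m := ediv2 (EVar 0) in
     eif (EOp1 neven murec_neven (EVar 0))
       (emul (eleft_gap m (EVar 1)) (eno_gap_below m (EVar 1)))
       (emul (emul (eright_gap m (EVar 1)) (enot (eleft_gap m (EVar 1))))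
             (eno_gap_below m (EVar 1))))
    (fun n c => llpo_instance (fun s => code_nth s c) n)); [reflexivity|].
  intros n c. cbn [eval_expr nth]. unfold llpo_instance, bpair, neven, nif.
  destruct (Nat.even n); reflexivity.
Qed.

Lemma gap_indices_le m m' : m' <= m ->
  npair 0 (nfst3 m') <= npair 2 m /\ npair 0 (nsnd3 m') <= npair 2 m /\
  npair 1 (nsnd3 m') <= npair 2 m /\ npair 1 (nthd3 m') <= npair 2 m /\
  npair 2 m' <= npair 2 m.
Proof.
  intros Hm. unfold nfst3, nsnd3, nthd3.
  pose proof (nunpair_fst_le m'). pose proof (nunpair_snd_le m').
  pose proof (nunpair_fst_le (snd (nunpair m'))). pose proof (nunpair_snd_le (snd (nunpair m'))).
  repeat split; apply npair_mono; lia.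
Qed.

Lemma llpo_instance_ext g g' n :
  (forall s, s <= npair 2 (Nat.div2 n) -> g s = g' s) -> llpo_instance g n = llpo_instance g' n.
Proof.
  intros Hgg'. set (m := Nat.div2 n) in *.
  assert (HL : forall m', m' <= m -> left_gap g m' = left_gap g' m').
  { intros m' Hm. destruct (gap_indices_le m m' Hm) as [? [? [? [? ?]]]].
    unfold left_gap. rewrite !Hgg' by assumption. reflexivity. }
  assert (HR : forall m', m' <= m -> right_gap g m' = right_gap g' m').
  { intros m' Hm. destruct (gap_indices_le m m' Hm) as [? [? [? [? ?]]]].
    unfold right_gap. rewrite !Hgg' by assumption. reflexivity. }
  assert (HN : no_gap_below g m = no_gap_below g' m).
  { unfold no_gap_below, gap. f_equal. apply exists_below_ext. intros t Ht.
    rewrite HL, HR by lia. reflexivity. }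
  unfold llpo_instance, bpair, llpo_left, llpo_right. fold m.
  rewrite HL, HR, HN by lia. reflexivity.
Qed.

Lemma computes_llpo_instance : exists e, forall chi, computes e chi (llpo_instance chi).
Proof.
  destruct (computes_bounded_use (fun n g => llpo_instance g n)
                                 (fun n => S (npair 2 (Nat.div2 n)))) as [e He].
  - exact murec_llpo_instance.
  - apply (murec1_of_expr (ESucc (epair (EConst 2) (ediv2 (EVar 0))))
      (fun n => S (npair 2 (Nat.div2 n)))); reflexivity.
  - intros n g g' Hgg'. apply llpo_instance_ext. intros s Hs. apply Hgg'. lia.
  - exists e. exact He.
Qed.

Lemma no_gap_below_spec g m : no_gap_below g m <> 0 <-> forall t, t < m -> gap g t = 0.
Proof.
  unfold no_gap_below. pose proof (exists_below_spec m (gap g)) as Hspec.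
  destruct (exists_below_01 m (gap g)) as [E|E]; rewrite E in *; simpl; split; intros H.
  - intros t Ht. destruct (Nat.eq_dec (gap g t) 0); [assumption|]. exfalso.
    apply (proj2 Hspec); eauto.
  - lia.
  - lia.
  - exfalso. destruct (proj1 Hspec ltac:(lia)) as [t [Ht Hgap]]. apply Hgap, H, Ht.
Qed.

Lemma exists_first_gap g m : gap g m <> 0 ->
  exists m0, gap g m0 <> 0 /\ no_gap_below g m0 <> 0.
Proof.
  intros Hm. destruct (epsilon_smallest (fun m => gap g m <> 0)) as [m0 [Hm0 Hmin]].
  - intros n. destruct (Nat.eq_dec (gap g n) 0); auto.
  - eauto.
  - exists m0. split; [exact Hm0|]. apply no_gap_below_spec. intros t Ht.
    destruct (Nat.eq_dec (gap g t) 0) as [|Hne]; [assumption|]. specialize (Hmin t Hne). lia.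
Qed.

Lemma llpo_nonzero g (j : bool) m :
  (if j then llpo_right g m else llpo_left g m) <> 0 ->
  gap g m <> 0 /\ no_gap_below g m <> 0 /\ (j = true <-> left_gap g m = 0).
Proof.
  unfold llpo_left, llpo_right, gap. destruct j; intros H.
  - assert (left_gap g m = 0) by (destruct (left_gap g m); [reflexivity | simpl in H; lia]).
    split; [|split]; [lia .. | tauto].
  - split; [|split]; [lia .. | split; [discriminate | lia]].
Qed.

Lemma llpo_instance_in_dom g :
  mdom LLPO (beven (llpo_instance g), bodd (llpo_instance g)).
Proof.
  intros j j' m m'. cbn [fst snd]. unfold beven, bodd, llpo_instance.
  assert (Hsel : forall (b : bool) k,
    (if b then fun n => bpair (llpo_left g) (llpo_right g) (2 * n + 1)
          else fun n => bpair (llpo_left g) (llpo_right g) (2 * n)) k =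
    if b then llpo_right g k else llpo_left g k).
  { intros [|] k; [apply bpair_odd | apply bpair_even]. }
  rewrite !Hsel. intros H H'.
  apply llpo_nonzero in H as [Hg [Hn Hj]]. apply llpo_nonzero in H' as [Hg' [Hn' Hj']].
  rewrite no_gap_below_spec in Hn, Hn'.
  assert (m = m') as <-.
  { destruct (Nat.lt_trichotomy m m') as [Hlt|[|Hlt]]; [|assumption|].
    - exfalso. apply Hg, Hn', Hlt.
    - exfalso. apply Hg', Hn, Hlt. }
  split; [|reflexivity].
  destruct j, j'; [reflexivity | | | reflexivity]; exfalso.
  - assert (false = true) by (apply Hj', Hj; reflexivity). discriminate.
  - assert (false = true) by (apply Hj, Hj'; reflexivity). discriminate.
Qed.

Lemma mul3_01_neq0 a b c : (a = 0 \/ a = 1) -> (b = 0 \/ b = 1) -> (c = 0 \/ c = 1) ->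
  a * (1 - b) * (1 - c) <> 0 <-> a = 1 /\ b = 0 /\ c = 0.
Proof. intros [-> | ->] [-> | ->] [-> | ->]; simpl; split; intros; lia. Qed.

Lemma mul2_01_neq0 a c : (a = 0 \/ a = 1) -> (c = 0 \/ c = 1) ->
  a * (1 - c) <> 0 <-> a = 1 /\ c = 0.
Proof. intros [-> | ->] [-> | ->]; simpl; split; intros; lia. Qed.

Open Scope R_scope.

Section Gaps.

Variables (chi : Baire) (x : R) (A : R -> Prop) (d : R).
Hypothesis Hchi : atom_name chi (x, A).
Hypothesis Hd : is_dist x A d.

Let atom_1 := atom_name_1 chi x A Hchi.
Let atom_0 := atom_name_0 chi x A Hchi.
Let atom_01 := atom_name_01 chi x A Hchi.

Lemma left_gap_sound m : left_gap chi m <> 0%nat -> ~ A (x - d).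
Proof.
  unfold left_gap. rewrite mul3_01_neq0 by apply atom_01.
  rewrite atom_1, !atom_0, !(atom_left_iff x A d _ Hd), atom_gap_iff.
  intros [H1 [H2 H3]] HA. apply H3. right. exists (x - d). split; [exact HA|].
  apply Classical_Prop.not_or_and in H3 as [Hord _]. apply Classical_Prop.NNPP in Hord. lra.
Qed.

Lemma right_gap_sound m : right_gap chi m <> 0%nat -> ~ A (x + d).
Proof.
  unfold right_gap. rewrite mul3_01_neq0 by apply atom_01.
  rewrite atom_1, !atom_0, !(atom_right_iff x A d _ Hd), atom_gap_iff.
  intros [H1 [H2 H3]] HA. apply H3. right. exists (x + d). split; [exact HA|].
  apply Classical_Prop.not_or_and in H3 as [Hord _]. apply Classical_Prop.NNPP in Hord. lra.
Qed.

Lemma left_gap_complete : closed_set A -> ~ A (x - d) -> exists m, left_gap chi m <> 0%nat.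
Proof.
  intros Hc HL. destruct (closed_set_avoid A _ Hc HL) as [e [He Hmiss]].
  destruct (rhoR_dense (x - d - e) (x - d)) as [w1 Hw1]; [lra|].
  destruct (rhoR_dense (x - d) (x - d + e / 2)) as [w2 Hw2]; [lra|].
  destruct (rhoR_dense (rhoR w2) (x - d + e)) as [w3 Hw3]; [lra|].
  exists (ntriple w1 w2 w3). unfold left_gap.
  rewrite mul3_01_neq0 by apply atom_01.
  rewrite atom_1, !atom_0, !(atom_left_iff x A d _ Hd), atom_gap_iff,
    nfst3_ntriple, nsnd3_ntriple, nthd3_ntriple.
  split; [lra | split; [lra|]].
  intros [Hord|[y [Hy Hy13]]]; [apply Hord; lra|].
  apply (Hmiss y); [apply Rabs_def1; lra | exact Hy].
Qed.

Lemma right_gap_complete : closed_set A -> ~ A (x + d) -> exists m, right_gap chi m <> 0%nat.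
Proof.
  intros Hc HR. destruct (closed_set_avoid A _ Hc HR) as [e [He Hmiss]].
  destruct (rhoR_dense (x + d) (x + d + e)) as [w3 Hw3]; [lra|].
  destruct (rhoR_dense (x + d - e / 2) (x + d)) as [w2 Hw2]; [lra|].
  destruct (rhoR_dense (x + d - e) (rhoR w2)) as [w1 Hw1]; [lra|].
  exists (ntriple w1 w2 w3). unfold right_gap.
  rewrite mul3_01_neq0 by apply atom_01.
  rewrite atom_1, !atom_0, !(atom_right_iff x A d _ Hd), atom_gap_iff,
    nfst3_ntriple, nsnd3_ntriple, nthd3_ntriple.
  split; [lra | split; [lra|]].
  intros [Hord|[y [Hy Hy13]]]; [apply Hord; lra|].
  apply (Hmiss y); [apply Rabs_def1; lra | exact Hy].
Qed.

Lemma llpo_left_zero : closed_set A -> (forall m, llpo_left chi m = 0%nat) -> A (x - d).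
Proof.
  intros Hc Hzero. apply Classical_Prop.NNPP. intros HL.
  destruct (left_gap_complete Hc HL) as [m Hm].
  destruct (exists_first_gap chi m) as [m0 [Hgap Hfirst]]; [unfold gap; lia|].
  assert (HR : A (x + d)) by (destruct (is_dist_attained x A d Hc Hd); tauto).
  assert (right_gap chi m0 = 0%nat).
  { destruct (Nat.eq_dec (right_gap chi m0) 0) as [|Hne]; [assumption|].
    exfalso. exact (right_gap_sound m0 Hne HR). }
  specialize (Hzero m0). unfold llpo_left in Hzero. unfold gap in Hgap. nia.
Qed.

Lemma llpo_right_zero : closed_set A -> (forall m, llpo_right chi m = 0%nat) -> A (x + d).
Proof.
  intros Hc Hzero. apply Classical_Prop.NNPP. intros HR.
  destruct (right_gap_complete Hc HR) as [m Hm].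
  destruct (exists_first_gap chi m) as [m0 [Hgap Hfirst]]; [unfold gap; lia|].
  assert (HL : A (x - d)) by (destruct (is_dist_attained x A d Hc Hd); tauto).
  assert (HL0 : left_gap chi m0 = 0%nat).
  { destruct (Nat.eq_dec (left_gap chi m0) 0) as [|Hne]; [assumption|].
    exfalso. exact (left_gap_sound m0 Hne HL). }
  specialize (Hzero m0). unfold llpo_right in Hzero. rewrite HL0 in Hzero. unfold gap in Hgap.
  nia.
Qed.

End Gaps.

(** * Computing the selected point *)

Close Scope R_scope.

(* [h] interleaves an atom name (even positions) with the LLPO answer (position 1);
   [r] is accepted as an [n]-th approximation of x + d resp. x - d. *)
Definition point_test (h : nat -> nat) (n r : nat) : nat :=
  nif (h 1)
    (h (2 * npair 1 (ntriple r n 0)) * (1 - h (2 * npair 1 (ntriple r n 1))))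
    (h (2 * npair 0 (ntriple r n 1)) * (1 - h (2 * npair 0 (ntriple r n 0)))).

Definition point_test_bound (n r : nat) : nat := S (2 * npair 1 (ntriple r n 1)).

Lemma murec_point_test :
  MuRec 3 (fun v => point_test (fun s => code_nth s (nth 2 v 0)) (nth 0 v 0) (nth 1 v 0)).
Proof.
  apply (murec3_of_expr
    (let n := EVar 0 in let r := EVar 1 in let c := EVar 2 in
     let query t u := enth (emul (EConst 2) (epair (EConst t) (etriple r n (EConst u)))) c in
     eif (enth (EConst 1) c) (emul (query 1 0) (enot (query 1 1)))
                             (emul (query 0 1) (enot (query 0 0))))
    (fun n r c => point_test (fun s => code_nth s c) n r)); reflexivity.
Qed.

Lemma point_test_ext h h' n r : (forall s, s < point_test_bound n r -> h s = h' s) ->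
  point_test h n r = point_test h' n r.
Proof.
  intros Hhh'. unfold point_test_bound in Hhh'.
  assert (Hle : forall t u, t <= 1 -> u <= 1 ->
    2 * npair t (ntriple r n u) <= 2 * npair 1 (ntriple r n 1)).
  { intros t u Ht Hu. apply Nat.mul_le_mono_l. unfold ntriple. repeat apply npair_mono; lia. }
  pose proof (npair_ge_l 1 (ntriple r n 1)).
  unfold point_test. rewrite !Hhh' by (try apply Nat.lt_succ_r, Hle; lia). reflexivity.
Qed.

Lemma computes_point : exists e, forall h s,
  (forall n, point_test h n (s n) <> 0 /\ forall r, r < s n -> point_test h n r = 0) ->
  computes e h s.
Proof.
  apply (computes_least_witness (fun n r h => point_test h n r) point_test_bound).
  - exact murec_point_test.
  - apply (murec2_of_expr
      (ESucc (emul (EConst 2) (epair (EConst 1) (etriple (EVar 1) (EVar 0) (EConst 1)))))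
      point_test_bound); reflexivity.
  - intros n r g g'. apply point_test_ext.
  - intros n r r' Hrr'. unfold point_test_bound, ntriple.
    pose proof (npair_mono 1 (npair r (npair n 1)) 1 (npair r' (npair n 1))).
    pose proof (npair_mono r (npair n 1) r' (npair n 1)). lia.
  - intros n r. unfold point_test_bound, ntriple.
    pose proof (npair_ge_r 1 (npair r (npair n 1))). pose proof (npair_ge_l r (npair n 1)). lia.
Qed.

Open Scope R_scope.

Lemma computes_cauchy_point : exists e, forall h y,
  (forall n r, point_test h n r <> 0%nat -> Rabs (Qv r - y) <= (/ 2) ^ n) ->
  (forall n, exists r, point_test h n r <> 0%nat) ->
  exists s, computes e h s /\ cauchy s y.
Proof.
  destruct computes_point as [e He]. exists e. intros h y Happrox Hex.
  assert (Hleast : forall n, {r | point_test h n r <> 0%nat /\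
                                  forall r', point_test h n r' <> 0%nat -> (r <= r')%nat}).
  { intros n. apply epsilon_smallest; [|apply Hex].
    intros r. destruct (Nat.eq_dec (point_test h n r) 0); auto. }
  exists (fun n => proj1_sig (Hleast n)). split.
  - apply He. intros n. destruct (Hleast n) as [r [Hr Hmin]]. cbn [proj1_sig].
    split; [exact Hr|]. intros r' Hr'.
    destruct (Nat.eq_dec (point_test h n r') 0) as [|Hne]; [assumption|].
    specialize (Hmin r' Hne). lia.
  - intros n. apply Happrox. exact (proj1 (proj2_sig (Hleast n))).
Qed.

Section SelectedPoint.

Variables (chi : Baire) (x : R) (A : R -> Prop) (d : R) (b : bool) (h : nat -> nat).
Hypothesis Hchi : atom_name chi (x, A).
Hypothesis Hd : is_dist x A d.
Hypothesis Hh_atoms : forall t, h (2 * t)%nat = chi t.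
Hypothesis Hh_answer : h 1%nat = if b then 1%nat else 0%nat.

Let atom_1 := atom_name_1 chi x A Hchi.
Let atom_0 := atom_name_0 chi x A Hchi.
Let atom_01 := atom_name_01 chi x A Hchi.

Lemma point_test_spec n r : point_test h n r <> 0%nat <->
  if b then x + d < Qv r + (/ 2) ^ n /\ ~ (x + d < Qv r - (/ 2) ^ n)
  else Qv r - (/ 2) ^ n < x - d /\ ~ (Qv r + (/ 2) ^ n < x - d).
Proof.
  unfold point_test. rewrite Hh_answer, !Hh_atoms. destruct b; cbn [nif Nat.eqb];
    rewrite mul2_01_neq0, atom_1, atom_0 by apply atom_01.
  - rewrite !(atom_right_iff x A d _ Hd), !rhoR_ntriple. cbn [Nat.eqb].
    replace (Qv r + -1 * (/ 2) ^ n) with (Qv r - (/ 2) ^ n) by ring.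
    replace (Qv r + 1 * (/ 2) ^ n) with (Qv r + (/ 2) ^ n) by ring. reflexivity.
  - rewrite !(atom_left_iff x A d _ Hd), !rhoR_ntriple. cbn [Nat.eqb].
    replace (Qv r + -1 * (/ 2) ^ n) with (Qv r - (/ 2) ^ n) by ring.
    replace (Qv r + 1 * (/ 2) ^ n) with (Qv r + (/ 2) ^ n) by ring. reflexivity.
Qed.

Lemma point_test_approx n r : point_test h n r <> 0%nat ->
  Rabs (Qv r - (if b then x + d else x - d)) <= (/ 2) ^ n.
Proof. rewrite point_test_spec. intros Hr. apply Rabs_le_iff. destruct b; lra. Qed.

Lemma point_test_total n : exists r, point_test h n r <> 0%nat.
Proof.
  pose proof (halfpow_pos n).
  destruct (Qv_dense (if b then x + d else x - d - (/ 2) ^ n)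
                     (if b then x + d + (/ 2) ^ n else x - d)) as [r Hr]; [destruct b; lra|].
  exists r. apply point_test_spec. destruct b; lra.
Qed.

End SelectedPoint.

Lemma Wred_ProjAtoms_LLPO : Wred ProjAtoms LLPO.
Proof.
  destruct computes_llpo_instance as [eK HK]. destruct computes_cauchy_point as [eH HH].
  exists eK, eH. intros G HG chi [x A] Hchi [Hc Hne]. cbn [fst snd] in *.
  set (q := llpo_instance chi).
  destruct (HG q (beven q, bodd q)) as [b [Hb Hans]];
    [split; reflexivity | apply llpo_instance_in_dom|]. cbn in Hb, Hans.
  destruct (is_dist_exists x A Hne) as [d Hd].
  set (y := if b then x + d else x - d).
  assert (Hy : A y).
  { unfold y. destruct b.
    - apply (llpo_right_zero chi x A d); auto. intros m.
      rewrite <- (bpair_odd (llpo_left chi)). exact (f_equal (fun f => f m) Hans).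
    - apply (llpo_left_zero chi x A d); auto. intros m.
      rewrite <- (bpair_even _ (llpo_right chi)). exact (f_equal (fun f => f m) Hans). }
  set (h := bpair chi (G q)).
  destruct (HH h y) as [s [Hs Hcauchy]].
  - apply (point_test_approx chi x A d b h Hchi Hd); [apply bpair_even | exact Hb].
  - apply (point_test_total chi x A d b h Hchi Hd); [apply bpair_even | exact Hb].
  - exists q, s. split; [apply HK | split; [exact Hs|]]. exists y. split; [exact Hcauchy|].
    split; [exact Hy|]. cbn [fst snd]. pose proof (is_dist_nonneg x A d Hd).
    replace (Rabs (x - y)) with d; [exact Hd|]. unfold y. destruct b.
    + replace (x - (x + d)) with (- d) by ring. rewrite Rabs_Ropp, Rabs_right; lra.
    + replace (x - (x - d)) with d by ring. rewrite Rabs_right; lra.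
Qed.

Lemma Wred_ProjR_comp : Wred ProjR (mcomp ProjAtoms to_atoms).
Proof.
  destruct (computes_reindex (fun n => n) (murec_proj 1 0 ltac:(lia))) as [eK HK].
  destruct (computes_reindex (fun n => 2 * n + 1)%nat murec_odd) as [eH HH].
  exists eK, eH. intros G HG p xa Hp Hdom.
  destruct (HG p xa Hp) as [z [Hz [y [Hyx Hval]]]].
  { split; [exact Hdom | intros y ->; exact Hdom]. }
  simpl in Hyx. subst y.
  exists p, (fun n => bpair p (G p) (2 * n + 1)%nat). split; [apply HK | split; [apply HH|]].
  exists z. split; [|exact Hval]. intros n. rewrite bpair_odd. apply Hz.
Qed.

Theorem proposition4p16 : Wred_cprod ProjR LLPO lim.
Proof.
  exists RxAplusS, AtomS, RS, ProjAtoms, to_atoms.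
  split; [exact Wred_ProjAtoms_LLPO | split; [exact Wred_to_atoms_lim | exact Wred_ProjR_comp]].
Qed.
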